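(* The logics $\mathsf{E}$, $\mathsf{M}$, $\mathsf{MC}$, $\mathsf{EN}$, $\mathsf{MN}$, $\mathsf{K}$, $\mathsf{CE}$, $\mathsf{CM}$, $\mathsf{CMC}$, $\mathsf{CEN}$, $\mathsf{CMN}$, $\mathsf{CK}$ and $\mathsf{CKID}$ have the uniform Lyndon interpolation property (ULIP), and hence also the uniform interpolation property (UIP) and the Lyndon interpolation property (LIP).
   Context: Formulas of $\mathcal{L}_\Box$: atoms, $\bot$, $\wedge,\vee,\to$, unary $\Box$; of $\mathcal{L}_\triangleright$: atoms, $\bot$, $\wedge,\vee,\to$, binary $\triangleright$. $\top:=\bot\to\bot$, $\neg A:=A\to\bot$. Modal logics (in $\mathcal{L}_\Box$): $\mathsf{E}$ is the smallest set containing all instances of classical tautologies and closed under modus ponens and the rule: from $\phi\leftrightarrow\psi$ infer $\Box\phi\leftrightarrow\Box\psi$. Axiom schemes: (M) $\Box(\phi\wedge\psi)\to\Box\phi\wedge\Box\psi$; (C) $\Box\phi\wedge\Box\psi\to\Box(\phi\wedge\psi)$; (N) $\Box\top$. $\mathsf{EN}=\mathsf{E}+(N)$, $\mathsf{M}=\mathsf{E}+(M)$, $\mathsf{MN}=\mathsf{M}+(N)$, $\mathsf{MC}=\mathsf{M}+(C)$, $\mathsf{K}=\mathsf{MC}+(N)$. Conditional logics (in $\mathcal{L}_\triangleright$): $\mathsf{CE}$ is the smallest set containing all instances of classical tautologies and closed under modus ponens and the rule: from $\phi_0\leftrightarrow\phi_1$ and $\psi_0\leftrightarrow\psi_1$ infer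 $(\phi_0\triangleright\psi_0)\to(\phi_1\triangleright\psi_1)$. Axiom schemes: (CM) $(\phi\triangleright\psi\wedge\theta)\to(\phi\triangleright\psi)\wedge(\phi\triangleright\theta)$; (CC) $(\phi\triangleright\psi)\wedge(\phi\triangleright\theta)\to(\phi\triangleright\psi\wedge\theta)$; (CN) $\phi\triangleright\top$; (ID) $\phi\triangleright\phi$. $\mathsf{CEN}=\mathsf{CE}+(CN)$, $\mathsf{CM}=\mathsf{CE}+(CM)$, $\mathsf{CMN}=\mathsf{CM}+(CN)$, $\mathsf{CMC}=\mathsf{CM}+(CC)$, $\mathsf{CK}=\mathsf{CMC}+(CN)$, $\mathsf{CKID}=\mathsf{CK}+(ID)$. Positive/negative variables: $V^+(p)=\{p\}$, $V^-(p)=\varnothing$; $V^\pm(\bot)=V^\pm(\top)=\varnothing$; $V^\pm(\phi\odot\psi)=V^\pm(\phi)\cup V^\pm(\psi)$ for $\odot\in\{\wedge,\vee\}$; $V^+(\phi\to\psi)=V^-(\phi)\cup V^+(\psi)$, $V^-(\phi\to\psi)=V^+(\phi)\cup V^-(\psi)$; $V^\pm(\Box\phi)=V^\pm(\phi)$; $V^+(\phi\triangleright\psi)=V^-(\phi)\cup V^+(\psi)$, $V^-(\phi\triangleright\psi)=V^+(\phi)\cup V^-(\psi)$; $V=V^+\cup V^-$. $p^\circ$-free: $p\notin V^\circ(\cdot)$. ULIP for a logic $L$: for every formula $\phi$, atom $p$, $\circ\in\{+,-\}$ there are $p^\circ$-free formulas $\forall^\circ p\,\phi$, $\exists^\circ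 p\,\phi$ with $V^\dagger(\cdot)\subseteq V^\dagger(\phi)$ for both $\dagger\in\{+,-\}$, such that $L\vdash\forall^\circ p\,\phi\to\phi$; for every $p^\circ$-free $\psi$, $L\vdash\psi\to\phi$ implies $L\vdash\psi\to\forall^\circ p\,\phi$; $L\vdash\phi\to\exists^\circ p\,\phi$; for every $p^\circ$-free $\psi$, $L\vdash\phi\to\psi$ implies $L\vdash\exists^\circ p\,\phi\to\psi$. UIP: same with polarities omitted ($p$-free, $V$). LIP: if $L\vdash\phi\to\psi$ there is $\theta$ with $V^\dagger(\theta)\subseteq V^\dagger(\phi)\cap V^\dagger(\psi)$ for both $\dagger$, $L\vdash\phi\to\theta$, $L\vdash\theta\to\psi$. *)

From Stdlib Require Import Bool Arith.

(* Propositional formulas (used to define instance of a classical    *)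
(* tautology: a formula obtained from a tautology by substituting     *)
(* arbitrary formulas of the object language for its atoms).          *)
Inductive pform : Type :=
| PAtom (n : nat)
| PBot
| PAnd (a b : pform)
| POr (a b : pform)
| PImp (a b : pform).

Fixpoint peval (v : nat -> bool) (f : pform) : bool :=
  match f with
  | PAtom n => v n
  | PBot => false
  | PAnd a b => peval v a && peval v b
  | POr a b => peval v a || peval v b
  | PImp a b => implb (peval v a) (peval v b)
  end.

Definition tautology (f : pform) : Prop := forall v, peval v f = true.

(* [occ true p f = true]  <->  p ∈ V^+(f);                            *)
(* [occ false p f = true] <->  p ∈ V^-(f).                            *)
(* A logic is given as its set of theorems L : F -> Prop.             *)
Definition vars {F : Type} (occ : bool -> nat -> F -> bool) (p : nat) (f : F) : bool :=
  occ true p f || occ false p f.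

Definition ULIP_gen {F : Type} (imp : F -> F -> F) (occ : bool -> nat -> F -> bool)
  (L : F -> Prop) : Prop :=
  forall (phi : F) (p : nat) (s : bool),
    (exists A : F,
        occ s p A = false /\
        (forall (t : bool) (q : nat), occ t q A = true -> occ t q phi = true) /\
        L (imp A phi) /\
        (forall psi : F, occ s p psi = false -> L (imp psi phi) -> L (imp psi A))) /\
    (exists E : F,
        occ s p E = false /\
        (forall (t : bool) (q : nat), occ t q E = true -> occ t q phi = true) /\
        L (imp phi E) /\
        (forall psi : F, occ s p psi = false -> L (imp phi psi) -> L (imp E psi))).

Definition UIP_gen {F : Type} (imp : F -> F -> F) (occ : bool -> nat -> F -> bool)
  (L : F -> Prop) : Prop :=
  forall (phi : F) (p : nat),
    (exists A : F,
        vars occ p A = false /\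
        (forall q : nat, vars occ q A = true -> vars occ q phi = true) /\
        L (imp A phi) /\
        (forall psi : F, vars occ p psi = false -> L (imp psi phi) -> L (imp psi A))) /\
    (exists E : F,
        vars occ p E = false /\
        (forall q : nat, vars occ q E = true -> vars occ q phi = true) /\
        L (imp phi E) /\
        (forall psi : F, vars occ p psi = false -> L (imp phi psi) -> L (imp E psi))).

Definition LIP_gen {F : Type} (imp : F -> F -> F) (occ : bool -> nat -> F -> bool)
  (L : F -> Prop) : Prop :=
  forall phi psi : F, L (imp phi psi) ->
    exists theta : F,
      (forall (t : bool) (q : nat), occ t q theta = true ->
          occ t q phi = true /\ occ t q psi = true) /\
      L (imp phi theta) /\ L (imp theta psi).

Inductive mform : Type :=
| MAtom (n : nat)
| MBot
| MAnd (a b : mform)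
| MOr (a b : mform)
| MImp (a b : mform)
| MBox (a : mform).

Definition MTop : mform := MImp MBot MBot.
Definition MIff (a b : mform) : mform := MAnd (MImp a b) (MImp b a).

Fixpoint msubst (sg : nat -> mform) (f : pform) : mform :=
  match f with
  | PAtom n => sg n
  | PBot => MBot
  | PAnd a b => MAnd (msubst sg a) (msubst sg b)
  | POr a b => MOr (msubst sg a) (msubst sg b)
  | PImp a b => MImp (msubst sg a) (msubst sg b)
  end.

(* polarized occurrences: s = true is V^+, s = false is V^- *)
Fixpoint mocc (s : bool) (p : nat) (f : mform) : bool :=
  match f with
  | MAtom q => s && Nat.eqb p q
  | MBot => false
  | MAnd a b => mocc s p a || mocc s p b
  | MOr a b => mocc s p a || mocc s p b
  | MImp a b => mocc (negb s) p a || mocc s p b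
  | MBox a => mocc s p a
  end.

Inductive mprov (Ax : mform -> Prop) : mform -> Prop :=
| mp_taut (t : pform) (sg : nat -> mform) : tautology t -> mprov Ax (msubst sg t)
| mp_ax (f : mform) : Ax f -> mprov Ax f
| mp_mp (f g : mform) : mprov Ax (MImp f g) -> mprov Ax f -> mprov Ax g
| mp_re (f g : mform) : mprov Ax (MIff f g) -> mprov Ax (MIff (MBox f) (MBox g)).

Definition axM (f : mform) : Prop :=
  exists a b, f = MImp (MBox (MAnd a b)) (MAnd (MBox a) (MBox b)).
Definition axC (f : mform) : Prop :=
  exists a b, f = MImp (MAnd (MBox a) (MBox b)) (MBox (MAnd a b)).
Definition axN (f : mform) : Prop := f = MBox MTop.

Inductive modal_logic : Type := LE | LM | LMC | LEN | LMN | LK.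

Definition modal_axioms (L : modal_logic) (f : mform) : Prop :=
  match L with
  | LE => False
  | LM => axM f
  | LMC => axM f \/ axC f
  | LEN => axN f
  | LMN => axM f \/ axN f
  | LK => axM f \/ axC f \/ axN f
  end.

Definition mtheorems (L : modal_logic) : mform -> Prop := mprov (modal_axioms L).

Definition ULIP_m (L : mform -> Prop) : Prop := ULIP_gen MImp mocc L.
Definition UIP_m (L : mform -> Prop) : Prop := UIP_gen MImp mocc L.
Definition LIP_m (L : mform -> Prop) : Prop := LIP_gen MImp mocc L.

Inductive cform : Type :=
| CAtom (n : nat)
| CBot
| CAnd (a b : cform)
| COr (a b : cform)
| CImp (a b : cform)
| CCond (a b : cform).   (* a ▷ b *)

Definition CTop : cform := CImp CBot CBot.
Definition CIff (a b : cform) : cform := CAnd (CImp a b) (CImp b a).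

Fixpoint csubst (sg : nat -> cform) (f : pform) : cform :=
  match f with
  | PAtom n => sg n
  | PBot => CBot
  | PAnd a b => CAnd (csubst sg a) (csubst sg b)
  | POr a b => COr (csubst sg a) (csubst sg b)
  | PImp a b => CImp (csubst sg a) (csubst sg b)
  end.

Fixpoint cocc (s : bool) (p : nat) (f : cform) : bool :=
  match f with
  | CAtom q => s && Nat.eqb p q
  | CBot => false
  | CAnd a b => cocc s p a || cocc s p b
  | COr a b => cocc s p a || cocc s p b
  | CImp a b => cocc (negb s) p a || cocc s p b
  | CCond a b => cocc (negb s) p a || cocc s p b
  end.

Inductive cprov (Ax : cform -> Prop) : cform -> Prop :=
| cp_taut (t : pform) (sg : nat -> cform) : tautology t -> cprov Ax (csubst sg t)
| cp_ax (f : cform) : Ax f -> cprov Ax f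
| cp_mp (f g : cform) : cprov Ax (CImp f g) -> cprov Ax f -> cprov Ax g
| cp_re (a0 a1 b0 b1 : cform) :
    cprov Ax (CIff a0 a1) -> cprov Ax (CIff b0 b1) ->
    cprov Ax (CImp (CCond a0 b0) (CCond a1 b1)).

Definition axCM (f : cform) : Prop :=
  exists a b c, f = CImp (CCond a (CAnd b c)) (CAnd (CCond a b) (CCond a c)).
Definition axCC (f : cform) : Prop :=
  exists a b c, f = CImp (CAnd (CCond a b) (CCond a c)) (CCond a (CAnd b c)).
Definition axCN (f : cform) : Prop := exists a, f = CCond a CTop.
Definition axID (f : cform) : Prop := exists a, f = CCond a a.

Inductive cond_logic : Type := LCE | LCM | LCMC | LCEN | LCMN | LCK | LCKID.

Definition cond_axioms (L : cond_logic) (f : cform) : Prop :=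
  match L with
  | LCE => False
  | LCM => axCM f
  | LCMC => axCM f \/ axCC f
  | LCEN => axCN f
  | LCMN => axCM f \/ axCN f
  | LCK => axCM f \/ axCC f \/ axCN f
  | LCKID => axCM f \/ axCC f \/ axCN f \/ axID f
  end.

Definition ctheorems (L : cond_logic) : cform -> Prop := cprov (cond_axioms L).

Definition ULIP_c (L : cform -> Prop) : Prop := ULIP_gen CImp cocc L.
Definition UIP_c (L : cform -> Prop) : Prop := UIP_gen CImp cocc L.
Definition LIP_c (L : cform -> Prop) : Prop := LIP_gen CImp cocc L.

(* Boxes are read as conditionals [⊥ ▷ a], so it suffices to treat the conditional logics.
   Uniform interpolants are built by recursion on the nesting depth of conditionals.  Put
   [f] in conjunctive normal form over atoms and conditionals; for a clause that is not
   already a theorem, [∀^s p] of the clause is the disjunction of its [p^s]-free literals,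
   of the conditionals [c' ▷ w] that together with negative conditionals of the clause yield
   one of its positive conditionals by a rule instance, and of the negations [¬ (c'' ▷ e)]
   of conditionals following from its negative ones, where [c'], [w], [c''], [e] are
   interpolants of smaller depth.  Correctness is proved semantically: each logic is sound
   and complete for valuations of atoms and conditionals closed under its rule schema, and
   if the interpolant fails at such a valuation, moving the [p^s]-occurrences gives another
   rule-closed valuation that falsifies the clause but keeps every [p^s]-free formula true.
   UIP and LIP follow from ULIP by eliminating polarized atoms one at a time. *)

From Stdlib Require Import List Bool Arith Lia Classical ClassicalEpsilon.
Import ListNotations.

Definition classic_dec (P : Prop) : {P} + {~ P} := excluded_middle_informative P.

Definition cform_eq_dec : forall x y : cform, {x = y} + {x <> y}.
Proof. decide equality; apply Nat.eq_dec. Defined.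

Definition cpair_eq_dec : forall x y : cform * cform, {x = y} + {x <> y}.
Proof. decide equality; apply cform_eq_dec. Defined.

(** * Classical reasoning over conditional formulas *)

(* Conditionals are treated as propositional atoms: [vc a b] is the truth value of [a ▷ b]. *)
Fixpoint ceval (va : nat -> bool) (vc : cform -> cform -> bool) (f : cform) : bool :=
  match f with
  | CAtom n => va n
  | CBot => false
  | CAnd a b => ceval va vc a && ceval va vc b
  | COr a b => ceval va vc a || ceval va vc b
  | CImp a b => implb (ceval va vc a) (ceval va vc b)
  | CCond a b => vc a b
  end.

Lemma ceval_csubst va vc sg t :
  ceval va vc (csubst sg t) = peval (fun n => ceval va vc (sg n)) t.
Proof. induction t; simpl; try rewrite IHt1, IHt2; reflexivity. Qed.

Fixpoint cgens (f : cform) : list cform :=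
  match f with
  | CAtom n => [CAtom n]
  | CBot => []
  | CAnd a b | COr a b | CImp a b => cgens a ++ cgens b
  | CCond a b => [CCond a b]
  end.

Fixpoint index_of (g : cform) (l : list cform) : nat :=
  match l with
  | [] => 0
  | h :: t => if cform_eq_dec g h then 0 else S (index_of g t)
  end.

Lemma nth_index_of g l : In g l -> nth (index_of g l) l CBot = g.
Proof.
  induction l as [|h t IH]; simpl; [tauto|].
  destruct (cform_eq_dec g h); [subst; auto|].
  intros [H|H]; [congruence|auto].
Qed.

Fixpoint skeleton (G : list cform) (f : cform) : pform :=
  match f with
  | CAtom n => PAtom (index_of (CAtom n) G)
  | CBot => PBot
  | CAnd a b => PAnd (skeleton G a) (skeleton G b)
  | COr a b => POr (skeleton G a) (skeleton G b)
  | CImp a b => PImp (skeleton G a) (skeleton G b)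
  | CCond a b => PAtom (index_of (CCond a b) G)
  end.

Lemma csubst_skeleton G f :
  incl (cgens f) G -> csubst (fun n => nth n G CBot) (skeleton G f) = f.
Proof.
  induction f; simpl; intros H;
    try (rewrite IHf1, IHf2 by (intros x Hx; apply H; apply in_or_app; auto); reflexivity);
    try reflexivity; apply nth_index_of; apply H; simpl; auto.
Qed.

Lemma peval_skeleton G f u :
  peval u (skeleton G f) =
  ceval (fun n => u (index_of (CAtom n) G)) (fun a b => u (index_of (CCond a b) G)) f.
Proof. induction f; simpl; try rewrite IHf1, IHf2; reflexivity. Qed.

Section ClassicalReasoning.
Variable Ax : cform -> Prop.
Notation prov := (cprov Ax).

Lemma cprov_valid f : (forall va vc, ceval va vc f = true) -> prov f.
Proof.
  intros H. rewrite <- (csubst_skeleton (cgens f) f) by (intros x; auto).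
  apply cp_taut. intro u. rewrite peval_skeleton. apply H.
Qed.

Lemma cprov_entails (Hs : list cform) (c : cform) :
  Forall prov Hs ->
  (forall va vc, Forall (fun h => ceval va vc h = true) Hs -> ceval va vc c = true) ->
  prov c.
Proof.
  revert c; induction Hs as [|h t IH]; intros c HP HS.
  - apply cprov_valid; intros; apply HS; constructor.
  - inversion HP; subst.
    apply (cp_mp _ h c); auto.
    apply IH; auto. intros va vc Ht. simpl.
    destruct (ceval va vc h) eqn:E; simpl; auto.
Qed.

Lemma cprov_entails1 a c : prov a ->
  (forall va vc, ceval va vc a = true -> ceval va vc c = true) -> prov c.
Proof.
  intros. apply (cprov_entails [a]); auto.
  intros va vc F; inversion F; auto.
Qed.

Lemma cprov_entails2 a b c : prov a -> prov b ->
  (forall va vc, ceval va vc a = true -> ceval va vc b = true -> ceval va vc c = true) ->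
  prov c.
Proof.
  intros. apply (cprov_entails [a; b]); auto.
  intros va vc F; inversion F as [|? ? ? F2]; inversion F2; auto.
Qed.

Lemma cprov_entails3 a b d c : prov a -> prov b -> prov d ->
  (forall va vc, ceval va vc a = true -> ceval va vc b = true -> ceval va vc d = true ->
     ceval va vc c = true) ->
  prov c.
Proof.
  intros. apply (cprov_entails [a; b; d]); auto.
  intros va vc F; inversion F as [|? ? ? F2]; inversion F2 as [|? ? ? F3]; inversion F3; auto.
Qed.

End ClassicalReasoning.

Definition bigand (l : list cform) : cform := fold_right CAnd CTop l.
Definition bigor (l : list cform) : cform := fold_right COr CBot l.
Definition cneg (a : cform) : cform := CImp a CBot.
Definition cond_of (y : cform * cform) : cform := CCond (fst y) (snd y).

Lemma ceval_bigand va vc l : ceval va vc (bigand l) = forallb (ceval va vc) l.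
Proof. induction l; simpl; auto. rewrite IHl; auto. Qed.

Lemma ceval_bigor va vc l : ceval va vc (bigor l) = existsb (ceval va vc) l.
Proof. induction l; simpl; auto. rewrite IHl; auto. Qed.

Lemma cocc_bigand t q l : cocc t q (bigand l) = existsb (cocc t q) l.
Proof. induction l; simpl; auto. rewrite IHl; auto. Qed.

Lemma cocc_bigor t q l : cocc t q (bigor l) = existsb (cocc t q) l.
Proof. induction l; simpl; auto. rewrite IHl; auto. Qed.

Lemma cocc_cneg t q a : cocc t q (cneg a) = cocc (negb t) q a.
Proof. simpl. destruct (cocc (negb t) q a); auto. Qed.

(** * A semantics of rule-closed valuations *)

(* All the conditional logics are generated by one rule schema: from premisses [a_i ▷ b_i]
   (i ∈ S) with every [a_i] equivalent to [c], infer [c ▷ d] provided [⊢ [c ∧] ⋀ b_i → d]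
   and, unless the logic is monotone, [⊢ d → ⋀ b_i].  [arity_ok] says how many premisses
   are allowed (exactly one for CE/CM, at least one for CMC, at most one for CEN/CMN, any
   number for CK/CKID) and [with_id] adds [c] to the premisses (CKID). *)
Record rule_params := RuleParams {
  monotone : bool;
  arity_ok : nat -> bool;
  with_id : bool
}.

Record admissible (P : rule_params) : Prop := {
  adm_one : arity_ok P 1 = true;
  adm_sum : forall lens, arity_ok P (length lens) = true ->
    Forall (fun k => arity_ok P k = true) lens -> arity_ok P (list_sum lens) = true;
  adm_down : forall n k, arity_ok P n = true -> 1 <= k -> k <= n -> arity_ok P k = true;
  adm_nonmono_arity : monotone P = false -> forall n, arity_ok P n = true -> n <= 1;
  adm_nonmono_no_id : monotone P = false -> with_id P = false
}.

Definition id_guard (P : rule_params) (c X : cform) : cform :=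
  if with_id P then CAnd c X else X.

(* Proves [forall va vc, ... -> ceval va vc _ = true] by case analysis on the truth values
   of the generalized atoms involved. *)
Ltac ctaut :=
  let va := fresh "va" in let vc := fresh "vc" in
  intros va vc; unfold CIff, CTop, cneg, id_guard in *;
  repeat match goal with |- context [with_id ?P] =>
    let bb := fresh "bb" in let Eb := fresh "Eb" in
    remember (with_id P) as bb eqn:Eb; clear Eb; destruct bb end; simpl in *;
  unfold CIff, CTop, cneg in *; simpl in *;
  repeat (rewrite ?ceval_bigand, ?ceval_bigor, ?map_app, ?forallb_app, ?existsb_app in *);
  repeat match goal with H : ?x = _ |- _ => match type of x with bool => revert H end end;
  repeat (match goal with
          | |- context [with_id ?P] => let bb := fresh "bb" in let Eb := fresh "Eb" in
                remember (with_id P) as bb eqn:Eb; clear Eb; destruct bb; simpl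
          | |- context [ceval ?a ?b ?x] => destruct (ceval a b x)
          | |- context [forallb ?f ?l] => destruct (forallb f l)
          | |- context [existsb ?f ?l] => destruct (existsb f l)
          | |- context [?vc ?x ?y] => is_var vc; destruct (vc x y)
          end); simpl; intros; try discriminate; auto.

Fixpoint sublists {A} (l : list A) : list (list A) :=
  match l with
  | [] => [[]]
  | h :: t => map (cons h) (sublists t) ++ sublists t
  end.

Lemma filter_in_sublists {A} (f : A -> bool) l : In (filter f l) (sublists l).
Proof.
  induction l; simpl; auto.
  destruct (f a); apply in_or_app; [left; apply in_map|right]; auto.
Qed.

Lemma sublists_incl {A} (l m : list A) : In m (sublists l) -> incl m l.
Proof.
  revert m; induction l; simpl; intros m H.
  - destruct H as [<-|[]]; intros x [].
  - apply in_app_or in H as [H|H].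
    + apply in_map_iff in H as [m' [<- H]].
      intros x [<-|Hx]; simpl; auto. right; apply (IHl m'); auto.
    + intros x Hx; right; apply (IHl m); auto.
Qed.

Fixpoint cpairs (f : cform) : list (cform * cform) :=
  match f with
  | CAtom _ | CBot => []
  | CAnd a b | COr a b | CImp a b => cpairs a ++ cpairs b
  | CCond a b => [(a, b)]
  end.

Lemma ceval_agree va vc1 vc2 f :
  (forall y, In y (cpairs f) -> vc1 (fst y) (snd y) = vc2 (fst y) (snd y)) ->
  ceval va vc1 f = ceval va vc2 f.
Proof.
  induction f; simpl; intros H; auto;
    try (rewrite IHf1, IHf2; auto; intros y Hy; apply H; apply in_or_app; auto).
  apply (H (f1, f2)); auto.
Qed.

Lemma forallb_incl {A} (f : A -> bool) l m :
  incl m l -> forallb f l = true -> forallb f m = true.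
Proof. intros Hi H. apply forallb_forall; intros x Hx. rewrite forallb_forall in H; auto. Qed.

Section RuleSemantics.
Variable Ax : cform -> Prop.
Variable P : rule_params.
Notation prov := (cprov Ax).

Record rule_inst (S : list (cform * cform)) (c d : cform) : Prop := {
  ri_arity : arity_ok P (length S) = true;
  ri_ante : forall y, In y S -> prov (CIff (fst y) c);
  ri_conseq : prov (CImp (id_guard P c (bigand (map snd S))) d);
  ri_converse : monotone P = true \/ prov (CImp d (bigand (map snd S)))
}.

Definition rule_closed (vc : cform -> cform -> bool) : Prop :=
  forall S c d, rule_inst S c d ->
    (forall y, In y S -> vc (fst y) (snd y) = true) -> vc c d = true.

Hypothesis HP : admissible P.

Lemma rule_inst_refl c d : rule_inst [(c, d)] c d.
Proof.
  split; simpl.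
  - apply (adm_one _ HP).
  - intros y [<-|[]]; apply cprov_valid; ctaut.
  - apply cprov_valid; ctaut.
  - right; apply cprov_valid; ctaut.
Qed.

Lemma rule_inst_of_iff a0 a1 b0 b1 :
  prov (CIff a0 a1) -> prov (CIff b0 b1) -> rule_inst [(a0, b0)] a1 b1.
Proof.
  intros H1 H2; split; simpl.
  - apply (adm_one _ HP).
  - intros y [<-|[]]; auto.
  - apply (cprov_entails1 _ _ _ H2); ctaut.
  - right; apply (cprov_entails1 _ _ _ H2); ctaut.
Qed.

(* Replacing each premiss of a rule instance by the premisses of a rule instance
   concluding it gives again a rule instance; [lens] records the arities used. *)
Lemma rule_inst_flatten (Pr : cform * cform -> Prop) c : forall S',
  (forall y, In y S' -> prov (CIff (fst y) c)) ->
  (forall y, In y S' -> exists Sy, (forall z, In z Sy -> Pr z) /\ rule_inst Sy (fst y) (snd y)) ->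
  exists S lens, (forall z, In z S -> Pr z) /\ length lens = length S' /\
    Forall (fun k => arity_ok P k = true) lens /\ length S = list_sum lens /\
    (forall z, In z S -> prov (CIff (fst z) c)) /\
    prov (CImp (id_guard P c (bigand (map snd S))) (bigand (map snd S'))) /\
    (monotone P = false -> prov (CImp (bigand (map snd S')) (bigand (map snd S)))).
Proof.
  induction S' as [|y t IH]; intros Hf Hw.
  - exists [], []; simpl; repeat split; auto; try (intros ? []).
    + apply cprov_valid; ctaut.
    + intros; apply cprov_valid; ctaut.
  - destruct (Hw y (or_introl eq_refl)) as [Sy [HSy [Hl Hf' Hg Hm]]].
    destruct IH as [S0 [lens0 [HP0 [HL0 [HF0 [HS0 [Hf0 [Hg0 Hm0]]]]]]]].
    { intros; apply Hf; right; auto. }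
    { intros; apply Hw; right; auto. }
    exists (Sy ++ S0), (length Sy :: lens0). simpl. repeat split.
    + intros z Hz; apply in_app_or in Hz as [Hz|Hz]; auto.
    + rewrite HL0; auto.
    + constructor; auto.
    + rewrite length_app, HS0; auto.
    + intros z Hz; apply in_app_or in Hz as [Hz|Hz]; auto.
      apply (cprov_entails2 _ _ _ _ (Hf' z Hz) (Hf y (or_introl eq_refl))); ctaut.
    + apply (cprov_entails3 _ _ _ _ _ Hg (Hf y (or_introl eq_refl)) Hg0); ctaut.
    + intros Hmf. destruct Hm as [Hm|Hm]; [congruence|].
      apply (cprov_entails2 _ _ _ _ Hm (Hm0 Hmf)); ctaut.
Qed.

Lemma rule_inst_trans (Pr : cform * cform -> Prop) S' c d :
  rule_inst S' c d ->
  (forall y, In y S' -> exists Sy, (forall z, In z Sy -> Pr z) /\ rule_inst Sy (fst y) (snd y)) ->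
  exists S, (forall z, In z S -> Pr z) /\ rule_inst S c d.
Proof.
  intros [Hl Hf Hg Hm] Hw.
  destruct (rule_inst_flatten Pr c S' Hf Hw)
    as [S [lens [HPr [HL [HF [HS [Hf0 [Hg0 Hm0]]]]]]]].
  exists S; split; auto; split; auto.
  - rewrite HS; apply (adm_sum _ HP); auto; rewrite HL; auto.
  - apply (cprov_entails2 _ _ _ _ Hg0 Hg); ctaut.
  - destruct (monotone P) eqn:E; auto. right. destruct Hm as [Hm|Hm]; [discriminate|].
    apply (cprov_entails2 _ _ _ _ Hm (Hm0 eq_refl)); ctaut.
Qed.

(* The least rule-closed valuation making the conditionals satisfying [Pr] true. *)
Definition rule_closure (Pr : cform * cform -> Prop) (c d : cform) : bool :=
  if classic_dec (exists S, (forall z, In z S -> Pr z) /\ rule_inst S c d) then true else false.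

Lemma rule_closure_closed Pr : rule_closed (rule_closure Pr).
Proof.
  intros S c d HCd Hall. unfold rule_closure.
  destruct (classic_dec _) as [_|Hno]; auto. exfalso; apply Hno.
  apply (rule_inst_trans Pr S); auto.
  intros y Hy. specialize (Hall y Hy). unfold rule_closure in Hall.
  destruct (classic_dec _) as [Hex|]; [exact Hex|discriminate].
Qed.

Section Soundness.
Hypothesis axioms_valid :
  forall f, Ax f -> forall va vc, rule_closed vc -> ceval va vc f = true.

Lemma cprov_sound f : prov f -> forall va vc, rule_closed vc -> ceval va vc f = true.
Proof.
  induction 1; intros va vc Hr.
  - rewrite ceval_csubst; apply H.
  - apply axioms_valid; auto.
  - specialize (IHcprov1 va vc Hr); specialize (IHcprov2 va vc Hr); simpl in *.
    rewrite IHcprov2 in IHcprov1; auto.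
  - simpl. destruct (vc a0 b0) eqn:E; simpl; auto.
    apply (Hr [(a0, b0)]); [apply rule_inst_of_iff; auto|].
    intros y [<-|[]]; auto.
Qed.
End Soundness.

Section Completeness.
Hypothesis rules_derivable :
  forall S c d, rule_inst S c d -> prov (CImp (bigand (map cond_of S)) (CCond c d)).

Lemma cprov_bigand l : Forall prov l -> prov (bigand l).
Proof.
  intros H; apply (cprov_entails _ l); auto. intros va vc F. rewrite ceval_bigand.
  apply forallb_forall. intros x Hx. rewrite Forall_forall in F; auto.
Qed.

(* All rule instances whose conclusion and premisses are among the conditionals of [B]. *)
Definition rule_axioms (B : list (cform * cform)) : cform :=
  bigand (flat_map (fun m => map (fun x =>
     if classic_dec (exists S, incl S m /\ rule_inst S (fst x) (snd x))
     then CImp (bigand (map cond_of m)) (cond_of x) else CTop) B) (sublists B)).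

Lemma cprov_rule_axioms B : prov (rule_axioms B).
Proof.
  apply cprov_bigand. apply Forall_forall. intros g Hg.
  apply in_flat_map in Hg as [m [_ Hg]]. apply in_map_iff in Hg as [x [<- _]].
  destruct (classic_dec _) as [[S [Hi HCd]]|_].
  - apply (cprov_entails1 _ _ _ (rules_derivable _ _ _ HCd)). intros va vc. simpl.
    rewrite !ceval_bigand.
    destruct (forallb (ceval va vc) (map cond_of m)) eqn:E; simpl; auto.
    rewrite (forallb_incl _ _ _ (incl_map cond_of Hi) E). simpl; auto.
  - apply cprov_valid; ctaut.
Qed.

Lemma rule_closure_agrees va vc B :
  ceval va vc (rule_axioms B) = true ->
  let T := filter (fun y => vc (fst y) (snd y)) B in
  forall y, In y B -> rule_closure (fun z => In z T) (fst y) (snd y) = vc (fst y) (snd y).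
Proof.
  intros EG T y Hy. unfold rule_closure.
  destruct (vc (fst y) (snd y)) eqn:E0.
  - destruct (classic_dec _) as [_|Hno]; auto. exfalso; apply Hno.
    exists [y]. split.
    + intros z [<-|[]]. unfold T; apply filter_In; auto.
    + destruct y; apply rule_inst_refl.
  - destruct (classic_dec _) as [HS|]; auto. exfalso.
    unfold rule_axioms in EG. rewrite ceval_bigand, forallb_forall in EG.
    set (g := fun m (x : cform * cform) =>
          if classic_dec (exists S, incl S m /\ rule_inst S (fst x) (snd x))
          then CImp (bigand (map cond_of m)) (cond_of x) else CTop).
    assert (Hin : In (g T y) (flat_map (fun m => map (g m) B) (sublists B))).
    { apply in_flat_map. exists T. split; [apply filter_in_sublists|]. apply in_map; auto. }
    specialize (EG _ Hin). unfold g in EG.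
    destruct (classic_dec _) as [_|Hno]; [|contradiction].
    simpl in EG. rewrite ceval_bigand in EG.
    assert (Ht : forallb (ceval va vc) (map cond_of T) = true).
    { apply forallb_forall. intros x Hx. apply in_map_iff in Hx as [z [<- Hz]].
      unfold T in Hz. apply filter_In in Hz as [_ Hz]. simpl; auto. }
    rewrite Ht in EG. simpl in EG. congruence.
Qed.

Lemma cprov_complete f : (forall va vc, rule_closed vc -> ceval va vc f = true) -> prov f.
Proof.
  intros H. apply NNPP; intros Hn.
  set (B := cpairs f).
  assert (Hfalse : ~ forall va vc, ceval va vc (CImp (rule_axioms B) f) = true).
  { intros Hv. apply Hn, (cp_mp _ _ _ (cprov_valid _ _ Hv) (cprov_rule_axioms B)). }
  apply not_all_ex_not in Hfalse as [va Hfalse].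
  apply not_all_ex_not in Hfalse as [vc Hv]. simpl in Hv.
  destruct (ceval va vc (rule_axioms B)) eqn:EG; [|simpl in Hv; congruence].
  destruct (ceval va vc f) eqn:Ef; [simpl in Hv; congruence|]. clear Hv.
  pose proof (rule_closure_agrees va vc B EG) as Hag; simpl in Hag.
  specialize (H va _ (rule_closure_closed (fun z => In z (filter (fun y => vc (fst y) (snd y)) B)))).
  rewrite (ceval_agree va _ vc f Hag) in H. congruence.
Qed.

End Completeness.
End RuleSemantics.

(** * Clausal normal forms over generalized atoms *)

Inductive gatom : Type := GAtom (n : nat) | GCond (a b : cform).

Definition gform (g : gatom) : cform :=
  match g with GAtom n => CAtom n | GCond a b => CCond a b end.

(* A clause [(l, r)] stands for [⋀ l → ⋁ r]; a dual clause [(l, r)] for [⋀ l ∧ ¬ ⋁ r]. *)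
Definition clause := (list gatom * list gatom)%type.
Definition clause_app (x y : clause) : clause := (fst x ++ fst y, snd x ++ snd y).
Definition clause_prod (A B : list clause) : list clause :=
  flat_map (fun x => map (clause_app x) B) A.

(* [nf f] is a pair (conjunction of clauses, disjunction of dual clauses), each equivalent to [f]. *)
Fixpoint nf (f : cform) : list clause * list clause :=
  match f with
  | CAtom n => ([([], [GAtom n])], [([GAtom n], [])])
  | CBot => ([([], [])], [])
  | CAnd a b => (fst (nf a) ++ fst (nf b), clause_prod (snd (nf a)) (snd (nf b)))
  | COr a b => (clause_prod (fst (nf a)) (fst (nf b)), snd (nf a) ++ snd (nf b))
  | CImp a b => (clause_prod (snd (nf a)) (fst (nf b)), fst (nf a) ++ snd (nf b))
  | CCond a b => ([([], [GCond a b])], [([GCond a b], [])])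
  end.

Section ClauseEval.
Variable va : nat -> bool.
Variable vc : cform -> cform -> bool.
Notation gval := (fun g => ceval va vc (gform g)).

Definition clause_holds (x : clause) : bool :=
  negb (forallb gval (fst x)) || existsb gval (snd x).
Definition dual_holds (x : clause) : bool :=
  forallb gval (fst x) && negb (existsb gval (snd x)).

Lemma clause_holds_app x y : clause_holds (clause_app x y) = clause_holds x || clause_holds y.
Proof.
  unfold clause_holds, clause_app; simpl. rewrite forallb_app, existsb_app.
  destruct (forallb _ (fst x)), (forallb _ (fst y)), (existsb _ (snd x)), (existsb _ (snd y));
    reflexivity.
Qed.

Lemma dual_holds_app x y : dual_holds (clause_app x y) = dual_holds x && dual_holds y.
Proof.
  unfold dual_holds, clause_app; simpl. rewrite forallb_app, existsb_app.
  destruct (forallb _ (fst x)), (forallb _ (fst y)), (existsb _ (snd x)), (existsb _ (snd y));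
    reflexivity.
Qed.

Lemma forallb_clause_prod A B :
  forallb clause_holds (clause_prod A B) = forallb clause_holds A || forallb clause_holds B.
Proof.
  induction A as [|x A IH]; simpl; auto. rewrite forallb_app, IH.
  assert (H : forall B, forallb clause_holds (map (clause_app x) B) =
                        clause_holds x || forallb clause_holds B).
  { induction B0; simpl; [destruct (clause_holds x); auto|].
    rewrite clause_holds_app, IHB0.
    destruct (clause_holds x), (clause_holds a), (forallb clause_holds B0); auto. }
  rewrite H. destruct (clause_holds x), (forallb clause_holds A), (forallb clause_holds B); auto.
Qed.

Lemma existsb_clause_prod A B :
  existsb dual_holds (clause_prod A B) = existsb dual_holds A && existsb dual_holds B.
Proof.
  induction A as [|x A IH]; simpl; auto. rewrite existsb_app, IH.
  assert (H : forall B, existsb dual_holds (map (clause_app x) B) =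
                        dual_holds x && existsb dual_holds B).
  { induction B0; simpl; [destruct (dual_holds x); auto|].
    rewrite dual_holds_app, IHB0.
    destruct (dual_holds x), (dual_holds a), (existsb dual_holds B0); auto. }
  rewrite H. destruct (dual_holds x), (existsb dual_holds A), (existsb dual_holds B); auto.
Qed.

Lemma forallb_clause_dual A : forallb clause_holds A = negb (existsb dual_holds A).
Proof.
  induction A as [|x A IH]; simpl; auto. rewrite IH.
  unfold clause_holds, dual_holds.
  destruct (forallb _ (fst x)), (existsb _ (snd x)), (existsb dual_holds A); auto.
Qed.

Lemma nf_eval f :
  forallb clause_holds (fst (nf f)) = ceval va vc f /\
  existsb dual_holds (snd (nf f)) = ceval va vc f.
Proof.
  induction f; simpl.
  - unfold clause_holds, dual_holds; simpl. destruct (va n); auto.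
  - unfold clause_holds; simpl; auto.
  - destruct IHf1 as [A1 B1], IHf2 as [A2 B2].
    rewrite forallb_app, existsb_clause_prod, A1, A2, B1, B2; auto.
  - destruct IHf1 as [A1 B1], IHf2 as [A2 B2].
    rewrite forallb_clause_prod, existsb_app, A1, A2, B1, B2; auto.
  - destruct IHf1 as [A1 B1], IHf2 as [A2 B2].
    rewrite forallb_clause_prod, existsb_app, forallb_clause_dual, B1, A2, B2.
    rewrite <- A1, forallb_clause_dual, negb_involutive.
    destruct (existsb dual_holds (fst (nf f1))), (ceval va vc f2); auto.
  - unfold clause_holds, dual_holds; simpl. destruct (vc f1 f2); auto.
Qed.

End ClauseEval.

Fixpoint cdepth (f : cform) : nat :=
  match f with
  | CAtom _ | CBot => 0
  | CAnd a b | COr a b | CImp a b => max (cdepth a) (cdepth b)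
  | CCond a b => S (max (cdepth a) (cdepth b))
  end.

Definition polar (pol t : bool) : bool := if pol then t else negb t.

Definition embeds (pol : bool) (a f : cform) : Prop :=
  (forall t q, cocc t q a = true -> cocc (polar pol t) q f = true) /\ cdepth a <= cdepth f.

Lemma embeds_trans p1 p2 a b c :
  embeds p1 a b -> embeds p2 b c -> embeds (polar p2 p1) a c.
Proof.
  intros [O1 D1] [O2 D2]; split; [|lia].
  intros t q H. apply O1, O2 in H. destruct p1, p2, t; exact H.
Qed.

Lemma embeds_refl a : embeds true a a.
Proof. split; auto. Qed.

Lemma embeds_binary f a b :
  (forall t q, cocc t q f = cocc t q a || cocc t q b) -> cdepth f = max (cdepth a) (cdepth b) ->
  embeds true a f /\ embeds true b f.
Proof.
  intros Ho Hd; split; split; try lia; intros t q H; simpl; rewrite Ho, H; auto with bool.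
Qed.

Lemma embeds_imp_ante a b : embeds false a (CImp a b).
Proof. split; simpl; [|lia]. intros t q H. rewrite negb_involutive, H; auto. Qed.

Definition clause_bounded (Pl Pr : gatom -> Prop) (x : clause) : Prop :=
  (forall g, In g (fst x) -> Pl g) /\ (forall g, In g (snd x) -> Pr g).

Lemma clause_bounded_app Pl Pr x y :
  clause_bounded Pl Pr x -> clause_bounded Pl Pr y -> clause_bounded Pl Pr (clause_app x y).
Proof.
  intros [H1 H2] [H3 H4]; split; simpl; intros g Hg; apply in_app_or in Hg as [Hg|Hg]; auto.
Qed.

Lemma clause_bounded_weaken (Pl Pr Pl' Pr' : gatom -> Prop) x :
  (forall g, Pl g -> Pl' g) -> (forall g, Pr g -> Pr' g) ->
  clause_bounded Pl Pr x -> clause_bounded Pl' Pr' x.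
Proof. intros H1 H2 [H3 H4]; split; auto. Qed.

Lemma in_clause_prod x A B :
  In x (clause_prod A B) -> exists a b, In a A /\ In b B /\ x = clause_app a b.
Proof.
  unfold clause_prod; intros H. apply in_flat_map in H as [a [Ha H]].
  apply in_map_iff in H as [b [<- Hb]]. eauto.
Qed.

Definition gembeds (pol : bool) (f : cform) (g : gatom) : Prop := embeds pol (gform g) f.

Definition nf_bounded (f f' : cform) (pol : bool) : Prop :=
  (forall x, In x (fst (nf f)) ->
     clause_bounded (gembeds (negb pol) f') (gembeds pol f') x) /\
  (forall x, In x (snd (nf f)) ->
     clause_bounded (gembeds pol f') (gembeds (negb pol) f') x).

Lemma nf_bounded_lift f f' f'' pol pol' :
  nf_bounded f f' pol -> embeds pol' f' f'' -> nf_bounded f f'' (polar pol' pol).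
Proof.
  intros [H1 H2] He.
  assert (L : forall p g, gembeds p f' g -> gembeds (polar pol' p) f'' g).
  { intros p g Hg. apply (embeds_trans _ _ _ _ _ Hg He). }
  split; intros x Hx; [pose proof (H1 x Hx) as Hb|pose proof (H2 x Hx) as Hb];
    (eapply clause_bounded_weaken; [| |exact Hb]); intros g Hg; apply L in Hg;
    destruct pol, pol'; exact Hg.
Qed.

Lemma nf_bounded_self f : nf_bounded f f true.
Proof.
  induction f.
  - split; intros x [<-|[]]; split; intros g Hg; simpl in Hg;
      (contradiction || (destruct Hg as [<-|[]]; apply embeds_refl)).
  - split; intros x Hx; [destruct Hx as [<-|[]]; split; intros ? []|contradiction].
  - destruct (embeds_binary (CAnd f1 f2) f1 f2) as [E1 E2]; auto.
    destruct (nf_bounded_lift _ _ _ _ _ IHf1 E1) as [A1 B1].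
    destruct (nf_bounded_lift _ _ _ _ _ IHf2 E2) as [A2 B2].
    split; simpl; intros x Hx.
    + apply in_app_or in Hx as [Hx|Hx]; auto.
    + apply in_clause_prod in Hx as [a [b [Ha [Hb ->]]]]. apply clause_bounded_app; auto.
  - destruct (embeds_binary (COr f1 f2) f1 f2) as [E1 E2]; auto.
    destruct (nf_bounded_lift _ _ _ _ _ IHf1 E1) as [A1 B1].
    destruct (nf_bounded_lift _ _ _ _ _ IHf2 E2) as [A2 B2].
    split; simpl; intros x Hx.
    + apply in_clause_prod in Hx as [a [b [Ha [Hb ->]]]]. apply clause_bounded_app; auto.
    + apply in_app_or in Hx as [Hx|Hx]; auto.
  - assert (E1 := embeds_imp_ante f1 f2).
    assert (E2 : embeds true f2 (CImp f1 f2)).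
    { split; simpl; [|lia]. intros t q H. rewrite H; auto with bool. }
    destruct (nf_bounded_lift _ _ _ _ _ IHf1 E1) as [A1 B1].
    destruct (nf_bounded_lift _ _ _ _ _ IHf2 E2) as [A2 B2].
    split; simpl; intros x Hx.
    + apply in_clause_prod in Hx as [a [b [Ha [Hb ->]]]]. apply clause_bounded_app; auto.
    + apply in_app_or in Hx as [Hx|Hx]; auto.
  - split; intros x [<-|[]]; split; intros g Hg; simpl in Hg;
      (contradiction || (destruct Hg as [<-|[]]; apply embeds_refl)).
Qed.

Definition latoms (l : list gatom) : list nat :=
  flat_map (fun g => match g with GAtom n => [n] | _ => [] end) l.
Definition lconds (l : list gatom) : list (cform * cform) :=
  flat_map (fun g => match g with GCond a b => [(a, b)] | _ => [] end) l.

Lemma in_latoms n l : In n (latoms l) <-> In (GAtom n) l.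
Proof.
  unfold latoms; rewrite in_flat_map; split.
  - intros [g [Hg Hn]]; destruct g; simpl in Hn; [destruct Hn as [<-|[]]; auto|contradiction].
  - intros H; exists (GAtom n); simpl; auto.
Qed.

Lemma in_lconds y l : In y (lconds l) <-> In (GCond (fst y) (snd y)) l.
Proof.
  unfold lconds; rewrite in_flat_map; split.
  - intros [g [Hg Hn]]; destruct g; simpl in Hn; [contradiction|destruct Hn as [<-|[]]; auto].
  - intros H; exists (GCond (fst y) (snd y)); simpl; destruct y; auto.
Qed.

Definition clause_form (x : clause) : cform :=
  CImp (bigand (map gform (fst x))) (bigor (map gform (snd x))).

Lemma ceval_clause_form va vc x : ceval va vc (clause_form x) = clause_holds va vc x.
Proof.
  unfold clause_form, clause_holds. simpl. rewrite ceval_bigand, ceval_bigor.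
  assert (E1 : forall l, forallb (ceval va vc) (map gform l) =
                         forallb (fun g => ceval va vc (gform g)) l).
  { induction l; simpl; auto. rewrite IHl; auto. }
  assert (E2 : forall l, existsb (ceval va vc) (map gform l) =
                         existsb (fun g => ceval va vc (gform g)) l).
  { induction l; simpl; auto. rewrite IHl; auto. }
  rewrite E1, E2. destruct (forallb _ _), (existsb _ _); auto.
Qed.

Lemma forallb_gform va vc l :
  forallb (fun g => ceval va vc (gform g)) l = true <->
  (forall n, In n (latoms l) -> va n = true) /\
  (forall y, In y (lconds l) -> vc (fst y) (snd y) = true).
Proof.
  rewrite forallb_forall. split.
  - intros H; split; [intros n Hn; apply in_latoms in Hn|intros y Hy; apply in_lconds in Hy];
      apply H in Hn || apply H in Hy; auto.
  - intros [H1 H2] g Hg. destruct g; simpl.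
    + apply H1, in_latoms; auto.
    + apply (H2 (a, b)), in_lconds; auto.
Qed.

Lemma existsb_gform va vc l :
  existsb (fun g => ceval va vc (gform g)) l = true <->
  (exists n, In n (latoms l) /\ va n = true) \/
  (exists y, In y (lconds l) /\ vc (fst y) (snd y) = true).
Proof.
  rewrite existsb_exists. split.
  - intros [g [Hg H]]; destruct g; simpl in H.
    + left; exists n; rewrite in_latoms; auto.
    + right; exists (a, b); rewrite in_lconds; auto.
  - intros [[n [Hn H]]|[y [Hy H]]].
    + exists (GAtom n); rewrite <- in_latoms; auto.
    + exists (GCond (fst y) (snd y)); rewrite <- in_lconds; auto.
Qed.

Definition lconds_set (l : list gatom) := nodup cpair_eq_dec (lconds l).

Lemma in_lconds_set y l : In y (lconds_set l) <-> In y (lconds l).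
Proof. apply nodup_In. Qed.

Lemma cdepth_bigand m l :
  0 < m -> (forall z, In z l -> cdepth z < m) -> cdepth (bigand l) < m.
Proof.
  intros H0; induction l; simpl; intros H; auto.
  assert (cdepth (bigand l) < m) by (apply IHl; intros z Hz; apply H; right; auto).
  specialize (H a (or_introl eq_refl)). lia.
Qed.

(** * The uniform interpolants *)

Section Interpolant.
Variable Ax : cform -> Prop.
Variable P : rule_params.
Variable p : nat.
Notation prov := (cprov Ax).

Definition forall_interp (s : bool) (f A : cform) : Prop :=
  cocc s p A = false /\ (forall t q, cocc t q A = true -> cocc t q f = true) /\
  prov (CImp A f) /\
  (forall psi, cocc s p psi = false -> prov (CImp psi f) -> prov (CImp psi A)).
Definition exists_interp (s : bool) (f E : cform) : Prop :=
  cocc s p E = false /\ (forall t q, cocc t q E = true -> cocc t q f = true) /\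
  prov (CImp f E) /\
  (forall psi, cocc s p psi = false -> prov (CImp f psi) -> prov (CImp E psi)).

Lemma exists_interp_of_forall s f A :
  forall_interp (negb s) (cneg f) A -> exists_interp s f (cneg A).
Proof.
  intros [F [V [I U]]]. split; [|split; [|split]].
  - rewrite cocc_cneg; auto.
  - intros t q Ho. rewrite cocc_cneg in Ho. apply V in Ho.
    rewrite cocc_cneg, negb_involutive in Ho; auto.
  - apply (cprov_entails1 _ _ _ I); ctaut.
  - intros psi Hf Hp. assert (H : prov (CImp (cneg psi) A)).
    { apply U. rewrite cocc_cneg, negb_involutive; auto. apply (cprov_entails1 _ _ _ Hp); ctaut. }
    apply (cprov_entails1 _ _ _ H); ctaut.
Qed.

Definition id_imp (c X : cform) : cform := if with_id P then CImp c X else X.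

Section Clause.
(* Universal and existential interpolants of formulas of smaller depth. *)
Variable fa fe : bool -> cform -> cform.

Definition clause_lits (s : bool) (l r : list gatom) : list cform :=
  map CAtom (filter (fun q => negb (Nat.eqb q p && s)) (latoms r)) ++
  map (fun q => cneg (CAtom q)) (filter (fun q => negb (Nat.eqb q p && negb s)) (latoms l)).

(* A positive conditional [c ▷ d] of the clause, concluded by a rule from the negative
   conditionals [SG] of the clause and one more premiss [c' ▷ w] whose parts are
   interpolants of [c] and of [[c →] ⋀ SG → d]. *)
Definition pos_ante (s : bool) (y : cform * cform) := fa (negb s) (fst y).
Definition pos_conseq (s : bool) (SG : list (cform * cform)) (y : cform * cform) :=
  fa s (id_imp (fst y) (CImp (bigand (map snd SG)) (snd y))).
Definition pos_cond_at s SG y : list cform :=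
  if classic_dec (rule_inst Ax P ((pos_ante s y, pos_conseq s SG y) :: SG) (fst y) (snd y))
  then [CCond (pos_ante s y) (pos_conseq s SG y)] else [].
Definition pos_conds (s : bool) (l r : list gatom) : list cform :=
  flat_map (fun SG => flat_map (pos_cond_at s SG) (lconds r)) (sublists (lconds_set l)).

(* A conditional [c'' ▷ e] following from the negative conditionals [SG] of the clause,
   with [c''] and [e] interpolants of the first antecedent and of [⋀ SG]. *)
Definition neg_ante (s : bool) (SG : list (cform * cform)) :=
  match SG with [] => CTop | g :: _ => fa s (fst g) end.
Definition neg_conseq (s : bool) (SG : list (cform * cform)) :=
  fe (negb s) (bigand (map snd SG)).
Definition neg_cond_at s SG : list cform :=
  match SG with
  | [] => []
  | _ => if classic_dec (rule_inst Ax P SG (neg_ante s SG) (neg_conseq s SG))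
         then [cneg (CCond (neg_ante s SG) (neg_conseq s SG))] else []
  end.
Definition neg_conds (s : bool) (l : list gatom) : list cform :=
  flat_map (neg_cond_at s) (sublists (lconds_set l)).

Definition clause_disjuncts (s : bool) (x : clause) : list cform :=
  clause_lits s (fst x) (snd x) ++ pos_conds s (fst x) (snd x) ++ neg_conds s (fst x).

Definition clause_interp (s : bool) (x : clause) : cform :=
  if classic_dec (prov (clause_form x)) then CTop else bigor (clause_disjuncts s x).

Lemma in_clause_lits s l r z : In z (clause_lits s l r) <->
  (exists q, z = CAtom q /\ In q (latoms r) /\ negb (Nat.eqb q p && s) = true) \/
  (exists q, z = cneg (CAtom q) /\ In q (latoms l) /\ negb (Nat.eqb q p && negb s) = true).
Proof.
  unfold clause_lits. rewrite in_app_iff, !in_map_iff. split.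
  - intros [[q [<- Hq]]|[q [<- Hq]]]; apply filter_In in Hq as [H1 H2]; [left|right]; eauto.
  - intros [[q [-> [H1 H2]]]|[q [-> [H1 H2]]]]; [left|right]; exists q; rewrite filter_In; auto.
Qed.

Lemma in_pos_conds s l r z : In z (pos_conds s l r) <->
  exists SG y, In SG (sublists (lconds_set l)) /\ In y (lconds r) /\
    rule_inst Ax P ((pos_ante s y, pos_conseq s SG y) :: SG) (fst y) (snd y) /\
    z = CCond (pos_ante s y) (pos_conseq s SG y).
Proof.
  unfold pos_conds. rewrite in_flat_map. split.
  - intros [SG [HSG Hz]]. apply in_flat_map in Hz as [y [Hy Hz]]. unfold pos_cond_at in Hz.
    destruct (classic_dec _) as [HC|]; [|contradiction]. destruct Hz as [<-|[]].
    exists SG, y; auto.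
  - intros [SG [y [HSG [Hy [HC ->]]]]]. exists SG; split; auto.
    apply in_flat_map. exists y; split; auto.
    unfold pos_cond_at. destruct (classic_dec _); [left; auto|contradiction].
Qed.

Lemma in_neg_conds s l z : In z (neg_conds s l) <->
  exists SG, In SG (sublists (lconds_set l)) /\ SG <> [] /\
    rule_inst Ax P SG (neg_ante s SG) (neg_conseq s SG) /\
    z = cneg (CCond (neg_ante s SG) (neg_conseq s SG)).
Proof.
  unfold neg_conds. rewrite in_flat_map. split.
  - intros [SG [HSG Hz]]. unfold neg_cond_at in Hz. destruct SG as [|g SG']; [contradiction|].
    destruct (classic_dec _) as [HC|]; [|contradiction]. destruct Hz as [<-|[]].
    exists (g :: SG'); split; [auto|split; [discriminate|split; auto]].
  - intros [SG [HSG [Hne [HC ->]]]]. exists SG; split; auto. unfold neg_cond_at.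
    destruct SG; [congruence|]. destruct (classic_dec _); [left; auto|contradiction].
Qed.

End Clause.

(* Interpolants by recursion on the depth bound [n]: [∀^s p f] is the conjunction of the
   clause interpolants of the conjunctive normal form of [f]; [∃^s p f] is [¬ ∀^(¬s) p ¬f]. *)
Fixpoint uinterp (n : nat) (s : bool) (f : cform) : cform :=
  match n with
  | 0 => CTop
  | S m => bigand (map (clause_interp (uinterp m) (fun t y => cneg (uinterp m (negb t) (cneg y))) s)
                      (fst (nf f)))
  end.

(* [(va', vc')] agrees with [(va, vc)] on [p]-free parts and may only move the
   [s]-occurrences of [p] in the direction that preserves [p^s]-free formulas. *)
Definition simulates (s : bool) va vc va' vc' : Prop :=
  (forall q, q <> p -> va' q = va q) /\
  (s = true -> va' p = true -> va p = true) /\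
  (s = false -> va p = true -> va' p = true) /\
  (forall a b, cocc s p (CCond a b) = false -> vc a b = true -> vc' a b = true) /\
  (forall a b, cocc (negb s) p (CCond a b) = false -> vc' a b = true -> vc a b = true).

Lemma ceval_simulates s va vc va' vc' : simulates s va vc va' vc' -> forall chi,
  (cocc s p chi = false -> ceval va vc chi = true -> ceval va' vc' chi = true) /\
  (cocc (negb s) p chi = false -> ceval va' vc' chi = true -> ceval va vc chi = true).
Proof.
  intros [S1 [S2 [S3 [S4 S5]]]]. induction chi; simpl.
  - destruct (Nat.eq_dec n p) as [->|Hne].
    + rewrite Nat.eqb_refl. destruct s; simpl; split; intros H1 H2; try discriminate; auto.
    + rewrite (S1 n Hne); auto.
  - split; intros; discriminate.
  - destruct IHchi1 as [A1 B1], IHchi2 as [A2 B2]. split; intros Ho He;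
      apply orb_false_iff in Ho as [Ho1 Ho2]; apply andb_true_iff in He as [He1 He2];
      apply andb_true_iff; auto.
  - destruct IHchi1 as [A1 B1], IHchi2 as [A2 B2]. split; intros Ho He;
      apply orb_false_iff in Ho as [Ho1 Ho2]; apply orb_true_iff in He as [He|He];
      apply orb_true_iff; auto.
  - destruct IHchi1 as [A1 B1], IHchi2 as [A2 B2]. split; intros Ho He;
      apply orb_false_iff in Ho as [Ho1 Ho2].
    + destruct (ceval va' vc' chi1) eqn:E; simpl; auto.
      rewrite (B1 Ho1 eq_refl) in He; simpl in He; auto.
    + rewrite negb_involutive in Ho1.
      destruct (ceval va vc chi1) eqn:E; simpl; auto.
      rewrite (A1 Ho1 eq_refl) in He; simpl in He; auto.
  - split; intros Ho He; auto.
Qed.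

End Interpolant.

Lemma fa_map (g : cform -> bool) (S : list (cform * cform)) :
  forallb g (map snd S) = true <-> forall z, In z S -> g (snd z) = true.
Proof.
  rewrite forallb_forall. split.
  - intros H z Hz; apply H, in_map; auto.
  - intros H w Hw; apply in_map_iff in Hw as [z [<- Hz]]; auto.
Qed.

Lemma forallb_map_snd_split (S A B : list (cform * cform)) :
  (forall z, In z S <-> In z A \/ In z B) ->
  forall g, forallb g (map snd S) = forallb g (map snd A) && forallb g (map snd B).
Proof.
  intros H g. apply eq_iff_eq_true. rewrite andb_true_iff, !fa_map. split.
  - intros H1; split; intros z Hz; apply H1, H; auto.
  - intros [H1 H2] z Hz; apply H in Hz as [Hz|Hz]; auto.
Qed.

Lemma existsb_eqb_In q L : existsb (Nat.eqb q) L = true <-> In q L.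
Proof.
  rewrite existsb_exists. split.
  - intros [n [Hn E]]; apply Nat.eqb_eq in E; subst; auto.
  - intros H; exists q; split; auto; apply Nat.eqb_refl.
Qed.

Lemma cprov_iff_trans Ax a b c :
  cprov Ax (CIff a b) -> cprov Ax (CIff b c) -> cprov Ax (CIff a c).
Proof. intros H1 H2; apply (cprov_entails2 _ _ _ _ H1 H2); ctaut. Qed.

Section RuleCut.
Variable Ax : cform -> Prop.
Variable P : rule_params.
Notation prov := (cprov Ax).
Hypothesis HP : admissible P.

(* A rule instance with premisses [S1 ∪ S2] factors through an intermediate conditional
   [c' ▷ w] concluded from [S1]. *)
Lemma rule_inst_cut S S1 S2 c d c' w :
  rule_inst Ax P S c d ->
  (forall z, In z S <-> In z S1 \/ In z S2) ->
  S1 <> [] -> length S1 + length S2 <= length S ->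
  prov (CIff c' c) ->
  prov (CImp (bigand (map snd S1)) w) ->
  prov (CImp w (id_imp P c (CImp (bigand (map snd S2)) d))) ->
  rule_inst Ax P ((c', w) :: S2) c d /\ rule_inst Ax P S1 c' w.
Proof.
  intros [Hl Hf Hg Hm] Hset Hne Hlen Hc' H1w Hw2.
  pose proof (forallb_map_snd_split S S1 S2 Hset) as E.
  assert (HS1 : 1 <= length S1) by (destruct S1; [congruence|simpl; lia]).
  (* Without monotonicity the arity is at most one, so [S = S1] is a singleton. *)
  assert (Hnm : monotone P = false -> S2 = [] /\ prov (CImp d (bigand (map snd S1)))).
  { intros Em. pose proof (adm_nonmono_arity _ HP Em _ Hl).
    destruct S2; [|simpl in *; lia]. split; auto.
    destruct Hm as [Hm|Hm]; [congruence|].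
    apply (cprov_entails1 _ _ _ Hm). intros va vc. pose proof (E (ceval va vc)).
    revert va vc H0. ctaut. }
  split; split.
  - apply (adm_down _ HP (length S)); auto; simpl; lia.
  - intros z [<-|Hz]; simpl; auto. apply Hf, Hset; auto.
  - apply (cprov_entails1 _ _ _ Hw2). unfold id_imp. ctaut.
  - case_eq (monotone P); intros Em; [left; auto|right].
    destruct (Hnm Em) as [-> Hd]. apply (cprov_entails2 _ _ _ _ Hd H1w). ctaut.
  - apply (adm_down _ HP (length S)); auto; lia.
  - intros z Hz. apply (cprov_iff_trans _ _ c); [apply Hf, Hset; auto|].
    apply (cprov_entails1 _ _ _ Hc'); ctaut.
  - apply (cprov_entails1 _ _ _ H1w). ctaut.
  - case_eq (monotone P); intros Em; [left; auto|right].
    destruct (Hnm Em) as [-> Hd].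
    apply (cprov_entails2 _ _ _ _ Hw2 Hd). unfold id_imp.
    rewrite (adm_nonmono_no_id _ HP Em). ctaut.
Qed.

End RuleCut.

Section ClauseInterpolant.
Variable Ax : cform -> Prop.
Variable P : rule_params.
Variable p : nat.
Notation prov := (cprov Ax).
Hypothesis HP : admissible P.
Hypothesis axioms_valid :
  forall f, Ax f -> forall va vc, rule_closed Ax P vc -> ceval va vc f = true.
Hypothesis rules_derivable :
  forall S c d, rule_inst Ax P S c d -> prov (CImp (bigand (map cond_of S)) (CCond c d)).

Variable fa fe : bool -> cform -> cform.
Variable m : nat.
Hypothesis fa_interp : forall s y, cdepth y < m -> forall_interp Ax p s y (fa s y).
Hypothesis fe_interp : forall s y, cdepth y < m -> exists_interp Ax p s y (fe s y).
Variable f : cform.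
Variable x : clause.
Hypothesis x_bounded : clause_bounded (gembeds false f) (gembeds true f) x.
Hypothesis f_depth : cdepth f <= m.

Notation interp := (clause_interp Ax P p fa fe).

Lemma lconds_depth y l :
  In y (lconds l) -> (forall g, In g l -> cdepth (gform g) <= cdepth f) ->
  cdepth (fst y) < m /\ cdepth (snd y) < m.
Proof. intros H Hl. apply in_lconds, Hl in H. simpl in H. lia. Qed.

Lemma lconds_left_depth y : In y (lconds (fst x)) -> cdepth (fst y) < m /\ cdepth (snd y) < m.
Proof. intros H; apply (lconds_depth _ _ H). intros g Hg; apply (proj1 x_bounded g Hg). Qed.

Lemma lconds_right_depth y : In y (lconds (snd x)) -> cdepth (fst y) < m /\ cdepth (snd y) < m.
Proof. intros H; apply (lconds_depth _ _ H). intros g Hg; apply (proj2 x_bounded g Hg). Qed.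

Lemma sublist_lconds SG :
  In SG (sublists (lconds_set (fst x))) -> forall y, In y SG -> In y (lconds (fst x)).
Proof. intros H y Hy. apply in_lconds_set. apply (sublists_incl _ _ H); auto. Qed.

Lemma pos_conseq_depth SG y : In SG (sublists (lconds_set (fst x))) -> In y (lconds (snd x)) ->
  cdepth (id_imp P (fst y) (CImp (bigand (map snd SG)) (snd y))) < m.
Proof.
  intros H1 H2. destruct (lconds_right_depth y H2) as [D1 D2].
  assert (D3 : cdepth (bigand (map snd SG)) < m).
  { apply cdepth_bigand; [lia|]. intros z Hz. apply in_map_iff in Hz as [w [<- Hw]].
    apply (lconds_left_depth w (sublist_lconds SG H1 w Hw)). }
  unfold id_imp; destruct (with_id P); simpl; lia.
Qed.

Lemma neg_parts_depth SG : In SG (sublists (lconds_set (fst x))) -> SG <> [] ->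
  cdepth (bigand (map snd SG)) < m /\ (forall g, In g SG -> cdepth (fst g) < m).
Proof.
  intros H1 H2. destruct SG as [|g0 SG']; [congruence|].
  destruct (lconds_left_depth g0 (sublist_lconds _ H1 g0 (or_introl eq_refl))) as [D0 _].
  split.
  - apply cdepth_bigand; [lia|]. intros z Hz. apply in_map_iff in Hz as [w [<- Hw]].
    apply (lconds_left_depth w (sublist_lconds _ H1 w Hw)).
  - intros g Hg; apply (lconds_left_depth g (sublist_lconds _ H1 g Hg)).
Qed.

Lemma clause_interp_free s : cocc s p (interp s x) = false.
Proof.
  unfold clause_interp. destruct (classic_dec _); [reflexivity|]. rewrite cocc_bigor.
  destruct (existsb _ _) eqn:E; auto. apply existsb_exists in E as [z [Hz Ho]].
  unfold clause_disjuncts in Hz. rewrite !in_app_iff in Hz. destruct Hz as [Hz|[Hz|Hz]].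
  - apply in_clause_lits in Hz as [[q [-> [_ Hq]]]|[q [-> [_ Hq]]]]; simpl in Ho;
      rewrite Nat.eqb_sym in Ho; destruct s, (Nat.eqb q p); simpl in *; congruence.
  - apply in_pos_conds in Hz as [SG [y [HSG [Hy [_ ->]]]]]. simpl in Ho.
    unfold pos_ante, pos_conseq in Ho.
    destruct (fa_interp (negb s) (fst y) (proj1 (lconds_right_depth y Hy))) as [F1 _].
    destruct (fa_interp s _ (pos_conseq_depth SG y HSG Hy)) as [F2 _].
    rewrite F1, F2 in Ho; discriminate.
  - apply in_neg_conds in Hz as [SG [HSG [Hne [_ ->]]]]. rewrite cocc_cneg in Ho. simpl in Ho.
    destruct (neg_parts_depth SG HSG Hne) as [D1 D2].
    destruct SG as [|g SG']; [congruence|]. unfold neg_ante, neg_conseq in Ho.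
    rewrite negb_involutive in Ho.
    destruct (fa_interp s (fst g) (D2 g (or_introl eq_refl))) as [F1 _].
    destruct (fe_interp (negb s) _ D1) as [F2 _].
    rewrite F1, F2 in Ho; discriminate.
Qed.

Lemma left_cond_occ y t q : In y (lconds (fst x)) ->
  cocc t q (CCond (fst y) (snd y)) = true -> cocc (negb t) q f = true.
Proof. intros Hy Ho. apply in_lconds in Hy. apply (proj1 (proj1 x_bounded _ Hy) _ _ Ho). Qed.

Lemma right_cond_occ y t q : In y (lconds (snd x)) ->
  cocc t q (CCond (fst y) (snd y)) = true -> cocc t q f = true.
Proof. intros Hy Ho. apply in_lconds in Hy. apply (proj1 (proj2 x_bounded _ Hy) _ _ Ho). Qed.

Lemma conseqs_occ SG t q : In SG (sublists (lconds_set (fst x))) ->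
  cocc t q (bigand (map snd SG)) = true -> cocc (negb t) q f = true.
Proof.
  intros HSG Ho. rewrite cocc_bigand in Ho. apply existsb_exists in Ho as [w [Hw Ho]].
  apply in_map_iff in Hw as [g [<- Hg]].
  apply (left_cond_occ g t q (sublist_lconds SG HSG g Hg)). simpl; rewrite Ho; auto with bool.
Qed.

Lemma pos_cond_vars s SG y t q : In SG (sublists (lconds_set (fst x))) -> In y (lconds (snd x)) ->
  cocc t q (CCond (pos_ante fa s y) (pos_conseq P fa s SG y)) = true -> cocc t q f = true.
Proof.
  intros HSG Hy Ho. simpl in Ho. unfold pos_ante, pos_conseq in Ho.
  apply orb_true_iff in Ho as [Ho|Ho].
  - destruct (fa_interp (negb s) (fst y) (proj1 (lconds_right_depth y Hy))) as [_ [V _]].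
    apply (right_cond_occ y t q Hy). simpl. rewrite (V _ _ Ho); auto.
  - destruct (fa_interp s _ (pos_conseq_depth SG y HSG Hy)) as [_ [V _]]. apply V in Ho.
    unfold id_imp in Ho.
    assert (Ho2 : cocc (negb t) q (fst y) = true \/
                  cocc (negb t) q (bigand (map snd SG)) = true \/ cocc t q (snd y) = true).
    { destruct (with_id P); simpl in Ho; repeat rewrite orb_true_iff in Ho; tauto. }
    destruct Ho2 as [Ho2|[Ho2|Ho2]].
    + apply (right_cond_occ y t q Hy). simpl. rewrite Ho2; auto.
    + rewrite <- (negb_involutive t). apply (conseqs_occ SG); auto.
    + apply (right_cond_occ y t q Hy). simpl. rewrite Ho2; auto with bool.
Qed.

Lemma neg_cond_vars s SG t q : In SG (sublists (lconds_set (fst x))) -> SG <> [] ->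
  cocc t q (cneg (CCond (neg_ante fa s SG) (neg_conseq fe s SG))) = true -> cocc t q f = true.
Proof.
  intros HSG Hne Ho. rewrite cocc_cneg in Ho. simpl in Ho.
  destruct (neg_parts_depth SG HSG Hne) as [D1 D2].
  destruct SG as [|g SG']; [congruence|]. unfold neg_ante, neg_conseq in Ho.
  rewrite negb_involutive in Ho. rewrite <- (negb_involutive t).
  apply orb_true_iff in Ho as [Ho|Ho].
  - destruct (fa_interp s (fst g) (D2 g (or_introl eq_refl))) as [_ [V _]]. apply V in Ho.
    apply (left_cond_occ g (negb t) q (sublist_lconds _ HSG g (or_introl eq_refl))).
    simpl. rewrite negb_involutive, Ho; auto.
  - destruct (fe_interp (negb s) _ D1) as [_ [V _]]. apply V in Ho.
    apply (conseqs_occ _ _ _ HSG Ho).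
Qed.

Lemma clause_interp_vars s t q : cocc t q (interp s x) = true -> cocc t q f = true.
Proof.
  unfold clause_interp. destruct (classic_dec _); [discriminate|]. rewrite cocc_bigor.
  intros E. apply existsb_exists in E as [z [Hz Ho]].
  unfold clause_disjuncts in Hz. rewrite !in_app_iff in Hz. destruct Hz as [Hz|[Hz|Hz]].
  - apply in_clause_lits in Hz as [[q' [-> [Hq _]]]|[q' [-> [Hq _]]]].
    + apply in_latoms in Hq. apply (proj1 (proj2 x_bounded _ Hq)); auto.
    + apply in_latoms in Hq. rewrite cocc_cneg in Ho. rewrite <- (negb_involutive t).
      apply (proj1 (proj1 x_bounded _ Hq)); auto.
  - apply in_pos_conds in Hz as [SG [y [HSG [Hy [_ ->]]]]]. apply (pos_cond_vars s SG y); auto.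
  - apply in_neg_conds in Hz as [SG [HSG [Hne [_ ->]]]]. apply (neg_cond_vars s SG); auto.
Qed.

Lemma clause_interp_sound s va vc :
  rule_closed Ax P vc -> ceval va vc (interp s x) = true -> clause_holds va vc x = true.
Proof.
  intros Hr. unfold clause_interp. destruct (classic_dec _) as [Hp|Hnp].
  - intros _. rewrite <- ceval_clause_form. apply (cprov_sound Ax P HP axioms_valid _ Hp); auto.
  - rewrite ceval_bigor. intros E. apply existsb_exists in E as [z [Hz Ho]].
    unfold clause_holds. destruct (forallb _ (fst x)) eqn:EL; simpl; auto.
    apply forallb_gform in EL as [EL1 EL2].
    unfold clause_disjuncts in Hz. rewrite !in_app_iff in Hz. destruct Hz as [Hz|[Hz|Hz]].
    + apply in_clause_lits in Hz as [[q [-> [Hq _]]]|[q [-> [Hq _]]]]; simpl in Ho.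
      * apply existsb_gform. left; eauto.
      * rewrite (EL1 q Hq) in Ho; discriminate.
    + apply in_pos_conds in Hz as [SG [y [HSG [Hy [HCd ->]]]]]. simpl in Ho.
      apply existsb_gform. right. exists y; split; auto.
      apply (Hr _ _ _ HCd). intros w [<-|Hw]; simpl; auto.
      apply EL2. apply (sublist_lconds SG HSG w Hw).
    + apply in_neg_conds in Hz as [SG [HSG [Hne [HCd ->]]]]. simpl in Ho.
      rewrite (Hr _ _ _ HCd) in Ho; [discriminate|].
      intros w Hw. apply EL2. apply (sublist_lconds SG HSG w Hw).
Qed.

Lemma forall_interp_equiv s c c' psi :
  forall_interp Ax p s c c' -> cocc s p psi = false -> prov (CIff psi c) -> prov (CIff c' c).
Proof.
  intros [_ [_ [I U]]] Hf Hpc.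
  assert (H : prov (CImp psi c')) by (apply U; auto; apply (cprov_entails1 _ _ _ Hpc); ctaut).
  apply (cprov_entails3 _ _ _ _ _ I Hpc H); ctaut.
Qed.

(* The countermodel: if all disjuncts of the clause interpolant fail at a rule-closed
   [(va, vc)], then the clause fails at a rule-closed valuation simulating [(va, vc)]. *)
Section Countermodel.
Variable s : bool.
Variable va : nat -> bool.
Variable vc : cform -> cform -> bool.
Hypothesis vc_closed : rule_closed Ax P vc.
Hypothesis clause_unprovable : ~ prov (clause_form x).
Hypothesis disjuncts_false :
  forall z, In z (clause_disjuncts Ax P p fa fe s x) -> ceval va vc z = false.

Definition true_free_cond (y : cform * cform) : Prop :=
  vc (fst y) (snd y) = true /\ cocc s p (CCond (fst y) (snd y)) = false.

(* The new valuation makes true the true [p^s]-free conditionals and the negative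
   conditionals of the clause, and closes them under the rules. *)
Definition cex_premiss (z : cform * cform) : Prop :=
  true_free_cond z \/ In z (lconds (fst x)).

Lemma split_premisses S : (forall z, In z S -> cex_premiss z) ->
  exists ST SG, (forall z, In z ST -> true_free_cond z) /\
    In SG (sublists (lconds_set (fst x))) /\
    (forall z, In z S <-> In z ST \/ In z SG) /\ length ST + length SG <= length S.
Proof.
  intros HS.
  set (ST := filter (fun z => if classic_dec (true_free_cond z) then true else false) S).
  set (SGL := filter (fun z => if classic_dec (true_free_cond z) then false else true) S).
  set (SG := filter (fun y => if in_dec cpair_eq_dec y SGL then true else false)
                    (lconds_set (fst x))).
  assert (HSGL : forall z, In z SGL <-> In z S /\ ~ true_free_cond z).
  { intros z; unfold SGL; rewrite filter_In. destruct (classic_dec _); intuition discriminate. }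
  assert (HSG : forall z, In z SG <-> In z SGL).
  { intros z; unfold SG; rewrite filter_In. destruct (in_dec _ _ _); [|intuition discriminate].
    split; [tauto|]. split; auto. apply in_lconds_set.
    apply HSGL in i as [Hz Hn]. destruct (HS z Hz); tauto. }
  exists ST, SG. split; [|split; [apply filter_in_sublists|split]].
  - intros z Hz; unfold ST in Hz; apply filter_In in Hz as [_ E].
    destruct (classic_dec _); [auto|discriminate].
  - intros z. rewrite HSG, HSGL. unfold ST; rewrite filter_In.
    destruct (classic_dec (true_free_cond z)); intuition discriminate.
  - assert (Hle : length SG <= length SGL).
    { apply NoDup_incl_length; [apply NoDup_filter, NoDup_nodup|].
      intros y Hy; apply HSG; auto. }
    assert (Hsum : length ST + length SGL = length S).
    { unfold ST, SGL. clear. induction S as [|z S IH]; simpl; auto.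
      destruct (classic_dec _); simpl; lia. }
    lia.
Qed.

Lemma true_free_cond_parts z :
  true_free_cond z -> cocc (negb s) p (fst z) = false /\ cocc s p (snd z) = false.
Proof. intros [_ H]; simpl in H; apply orb_false_iff in H; auto. Qed.

Lemma true_free_conseqs_free ST :
  (forall z, In z ST -> true_free_cond z) -> cocc s p (bigand (map snd ST)) = false.
Proof.
  intros H. rewrite cocc_bigand. destruct (existsb _ _) eqn:E; auto.
  apply existsb_exists in E as [w [Hw E]]. apply in_map_iff in Hw as [z [<- Hz]].
  rewrite (proj2 (true_free_cond_parts z (H z Hz))) in E; discriminate.
Qed.

Lemma no_rule_from_left_conds y S : In y (lconds (snd x)) ->
  (forall z, In z S -> In z (lconds (fst x))) -> rule_inst Ax P S (fst y) (snd y) -> False.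
Proof.
  intros Hy HS HCd. apply clause_unprovable, (cprov_complete Ax P HP rules_derivable).
  intros va0 vc0 Hr0. rewrite ceval_clause_form.
  unfold clause_holds. destruct (forallb _ (fst x)) eqn:EL; simpl; auto.
  apply forallb_gform in EL as [_ EL2]. apply existsb_gform. right. exists y. split; auto.
  apply (Hr0 S _ _ HCd). auto.
Qed.

(* A positive conditional [c ▷ d] of the clause derived from [cex_premiss]es would make the
   disjunct [c' ▷ w] of [pos_conds] true. *)
Lemma no_rule_to_pos_cond y S : In y (lconds (snd x)) ->
  (forall z, In z S -> cex_premiss z) -> rule_inst Ax P S (fst y) (snd y) -> False.
Proof.
  intros Hy HS HCd. destruct (split_premisses S HS) as [ST [SG [HT [HSGin [Hset Hlen]]]]].
  destruct ST as [|t0 ST'].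
  { apply (no_rule_from_left_conds y S Hy); auto.
    intros z Hz. apply Hset in Hz as [[]|Hz]. apply (sublist_lconds SG HSGin z Hz). }
  destruct y as [c d]. cbn [fst snd] in *.
  destruct (lconds_right_depth (c, d) Hy) as [Dc _]; simpl in Dc.
  pose proof (fa_interp (negb s) c Dc) as Ic.
  destruct (true_free_cond_parts t0 (HT t0 (or_introl eq_refl))) as [F0 _].
  assert (Hc' : prov (CIff (fa (negb s) c) c)).
  { apply (forall_interp_equiv _ _ _ (fst t0) Ic F0), (ri_ante _ _ _ _ _ HCd), Hset; simpl; auto. }
  set (X := id_imp P c (CImp (bigand (map snd SG)) d)).
  destruct (fa_interp s X (pos_conseq_depth SG (c, d) HSGin Hy)) as [_ [_ [Iw Uw]]].
  assert (Hw : prov (CImp (bigand (map snd (t0 :: ST'))) (fa s X))).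
  { apply Uw; [apply true_free_conseqs_free; auto|].
    apply (cprov_entails1 _ _ _ (ri_conseq _ _ _ _ _ HCd)). intros va0 vc0.
    pose proof (forallb_map_snd_split _ _ _ Hset (ceval va0 vc0)).
    unfold X, id_imp. revert va0 vc0 H. ctaut. }
  destruct (rule_inst_cut Ax P HP S (t0 :: ST') SG c d (fa (negb s) c) (fa s X) HCd Hset
              ltac:(discriminate) Hlen Hc' Hw Iw) as [HC1 HC2].
  assert (Hfalse : vc (fa (negb s) c) (fa s X) = false).
  { apply (disjuncts_false (CCond _ _)). unfold clause_disjuncts. rewrite !in_app_iff.
    right; left. apply in_pos_conds. exists SG, (c, d); auto. }
  rewrite (vc_closed _ _ _ HC2) in Hfalse; [discriminate|]. intros z Hz. apply (HT z Hz).
Qed.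

(* A [p^(¬s)]-free conditional [a ▷ b] derived from [cex_premiss]es is already true: the
   negative conditionals involved are replaced by the disjunct [¬ (c'' ▷ e)] of [neg_conds]. *)
Lemma rule_to_free_cond a b S : cocc (negb s) p (CCond a b) = false ->
  (forall z, In z S -> cex_premiss z) -> rule_inst Ax P S a b -> vc a b = true.
Proof.
  intros Hab HS HCd. simpl in Hab. rewrite negb_involutive in Hab.
  apply orb_false_iff in Hab as [Fa Fb].
  destruct (split_premisses S HS) as [ST [SG [HT [HSGin [Hset Hlen]]]]].
  destruct SG as [|g SGr].
  { apply (vc_closed _ _ _ HCd). intros z Hz. apply Hset in Hz as [Hz|[]]. apply (HT z Hz). }
  destruct (neg_parts_depth (g :: SGr) HSGin ltac:(discriminate)) as [D1 D2].
  pose proof (fa_interp s (fst g) (D2 g (or_introl eq_refl))) as Ic.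
  assert (Hga : prov (CIff (fst g) a)) by (apply (ri_ante _ _ _ _ _ HCd), Hset; simpl; auto).
  assert (Hc'' : prov (CIff (fa s (fst g)) a)).
  { apply (cprov_iff_trans _ _ (fst g)); auto.
    apply (forall_interp_equiv _ _ _ a Ic Fa). apply (cprov_entails1 _ _ _ Hga); ctaut. }
  set (Y := CImp (id_guard P a (bigand (map snd ST))) b).
  assert (FY : cocc (negb s) p Y = false).
  { unfold Y, id_guard. simpl. rewrite negb_involutive. apply orb_false_iff; split; auto.
    destruct (with_id P); simpl; [rewrite Fa; simpl|]; apply true_free_conseqs_free; auto. }
  destruct (fe_interp (negb s) _ D1) as [_ [_ [Ie Ue]]].
  assert (HeY : prov (CImp (fe (negb s) (bigand (map snd (g :: SGr)))) Y)).
  { apply Ue; auto. apply (cprov_entails1 _ _ _ (ri_conseq _ _ _ _ _ HCd)). intros va0 vc0.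
    pose proof (forallb_map_snd_split S ST (g :: SGr)
                  (fun z => ltac:(rewrite Hset; tauto)) (ceval va0 vc0)).
    unfold Y. revert va0 vc0 H. ctaut. }
  assert (Hset' : forall z, In z S <-> In z (g :: SGr) \/ In z ST) by (intros z; rewrite Hset; tauto).
  destruct (rule_inst_cut Ax P HP S (g :: SGr) ST a b (fa s (fst g)) _ HCd Hset'
              ltac:(discriminate) ltac:(lia) Hc'' Ie
              ltac:(apply (cprov_entails1 _ _ _ HeY); unfold Y, id_imp; ctaut)) as [HC1 HC2].
  assert (Hdz : ceval va vc (cneg (CCond (fa s (fst g)) (fe (negb s) (bigand (map snd (g :: SGr))))))
                = false).
  { apply disjuncts_false. unfold clause_disjuncts. rewrite !in_app_iff; right; right.
    apply in_neg_conds. exists (g :: SGr); split; auto; split; [discriminate|auto]. }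
  simpl in Hdz. destruct (vc _ _) eqn:Ev in Hdz; [|discriminate].
  apply (vc_closed _ _ _ HC1). intros z [<-|Hz]; simpl; auto. apply (HT z Hz).
Qed.

(* Atoms of the clause get the value falsifying it; the other atoms keep their value. *)
Definition cex_va (q : nat) : bool :=
  if existsb (Nat.eqb q) (latoms (fst x)) then true
  else if existsb (Nat.eqb q) (latoms (snd x)) then false else va q.

Definition cex_vc := rule_closure Ax P cex_premiss.

Lemma left_atom_true q : In q (latoms (fst x)) ->
  negb (Nat.eqb q p && negb s) = true -> va q = true.
Proof.
  intros H1 H2. assert (Hz := disjuncts_false (cneg (CAtom q))). simpl in Hz.
  destruct (va q); auto. exfalso. assert (true = false); [apply Hz|discriminate].
  unfold clause_disjuncts. rewrite !in_app_iff; left. apply in_clause_lits. right. eauto.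
Qed.

Lemma right_atom_false q : In q (latoms (snd x)) ->
  negb (Nat.eqb q p && s) = true -> va q = false.
Proof.
  intros H1 H2. apply (disjuncts_false (CAtom q)). unfold clause_disjuncts.
  rewrite !in_app_iff; left. apply in_clause_lits. left. eauto.
Qed.

Lemma atom_not_both_sides q : In q (latoms (fst x)) -> In q (latoms (snd x)) -> False.
Proof.
  intros H1 H2. apply clause_unprovable, cprov_valid. intros va0 vc0.
  rewrite ceval_clause_form. unfold clause_holds.
  destruct (forallb _ (fst x)) eqn:EL; simpl; auto.
  apply forallb_gform in EL as [EL1 _]. apply existsb_gform. left. exists q; auto.
Qed.

Lemma cex_simulates : simulates p s va vc cex_va cex_vc.
Proof.
  split; [|split; [|split; [|split]]].
  - intros q Hq. unfold cex_va. apply Nat.eqb_neq in Hq.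
    destruct (existsb _ (latoms (fst x))) eqn:E1.
    + symmetry; apply left_atom_true; [apply existsb_eqb_In; auto|]. rewrite Hq; auto.
    + destruct (existsb _ (latoms (snd x))) eqn:E2; auto.
      symmetry; apply right_atom_false; [apply existsb_eqb_In; auto|]. rewrite Hq; auto.
  - intros Hs H. unfold cex_va in H. destruct (existsb _ (latoms (fst x))) eqn:E1.
    + apply left_atom_true; [apply existsb_eqb_In; auto|]. rewrite Nat.eqb_refl, Hs; auto.
    + destruct (existsb _ (latoms (snd x))); auto; discriminate.
  - intros Hs H. unfold cex_va. destruct (existsb _ (latoms (fst x))) eqn:E1; auto.
    destruct (existsb _ (latoms (snd x))) eqn:E2; auto.
    rewrite (right_atom_false p) in H; auto;
      [apply existsb_eqb_In; auto|rewrite Nat.eqb_refl, Hs; auto].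
  - intros a b Ho Hv. unfold cex_vc, rule_closure.
    destruct (classic_dec _) as [_|Hno]; auto. exfalso; apply Hno.
    exists [(a, b)]. split; [|apply rule_inst_refl; auto].
    intros z [<-|[]]. left. split; auto.
  - intros a b Ho Hv. unfold cex_vc, rule_closure in Hv.
    destruct (classic_dec _) as [[S [HS HCd]]|]; [|discriminate].
    apply (rule_to_free_cond a b S); auto.
Qed.

Lemma cex_falsifies : clause_holds cex_va cex_vc x = false.
Proof.
  unfold clause_holds.
  assert (HL : forallb (fun g => ceval cex_va cex_vc (gform g)) (fst x) = true).
  { apply forallb_gform. split.
    - intros n Hn. unfold cex_va. rewrite (proj2 (existsb_eqb_In n _) Hn); auto.
    - intros y Hy. unfold cex_vc, rule_closure.
      destruct (classic_dec _) as [_|Hno]; auto. exfalso; apply Hno.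
      exists [y]. split; [intros z [<-|[]]; right; auto|].
      destruct y; apply rule_inst_refl; auto. }
  rewrite HL. simpl. destruct (existsb _ (snd x)) eqn:E; auto.
  apply existsb_gform in E as [[n [Hn Hv]]|[y [Hy Hv]]].
  - unfold cex_va in Hv. destruct (existsb _ (latoms (fst x))) eqn:E1.
    + exfalso; apply (atom_not_both_sides n); auto. apply existsb_eqb_In; auto.
    + rewrite (proj2 (existsb_eqb_In n _) Hn) in Hv; discriminate.
  - unfold cex_vc, rule_closure in Hv.
    destruct (classic_dec _) as [[S [HS HCd]]|]; [|discriminate].
    exfalso; apply (no_rule_to_pos_cond y S); auto.
Qed.

End Countermodel.

Lemma clause_interp_cex s va vc :
  rule_closed Ax P vc -> ceval va vc (interp s x) = false ->
  exists va' vc', rule_closed Ax P vc' /\ simulates p s va vc va' vc' /\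
    clause_holds va' vc' x = false.
Proof.
  intros Hr HQ. unfold clause_interp in HQ.
  destruct (classic_dec _) as [Hp|Hnp]; [simpl in HQ; discriminate|].
  rewrite ceval_bigor in HQ.
  assert (Hdis : forall z, In z (clause_disjuncts Ax P p fa fe s x) -> ceval va vc z = false).
  { intros z Hz. destruct (ceval va vc z) eqn:E; auto.
    rewrite (proj2 (existsb_exists _ _) (ex_intro _ z (conj Hz E))) in HQ; discriminate. }
  exists (cex_va va), (cex_vc s vc). split; [|split].
  - apply rule_closure_closed; auto.
  - apply cex_simulates; auto.
  - apply cex_falsifies; auto.
Qed.

End ClauseInterpolant.

Lemma forallb_false_ex {A} (g : A -> bool) l :
  forallb g l = false -> exists z, In z l /\ g z = false.
Proof.
  induction l; simpl; [discriminate|]. destruct (g a) eqn:E; simpl.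
  - intros H; destruct (IHl H) as [z [H1 H2]]; eauto.
  - intros _; eauto.
Qed.

Section UniformInterpolation.
Variable Ax : cform -> Prop.
Variable P : rule_params.
Variable p : nat.
Notation prov := (cprov Ax).
Hypothesis HP : admissible P.
Hypothesis axioms_valid :
  forall f, Ax f -> forall va vc, rule_closed Ax P vc -> ceval va vc f = true.
Hypothesis rules_derivable :
  forall S c d, rule_inst Ax P S c d -> prov (CImp (bigand (map cond_of S)) (CCond c d)).

Lemma uinterp_step m s f :
  (forall s y, cdepth y < m -> forall_interp Ax p s y (uinterp Ax P p m s y)) ->
  cdepth f <= m -> forall_interp Ax p s f (uinterp Ax P p (S m) s f).
Proof.
  intros IH Hfm.
  set (fa := uinterp Ax P p m). set (fe := fun t y => cneg (uinterp Ax P p m (negb t) (cneg y))).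
  assert (DE : forall s y, cdepth y < m -> exists_interp Ax p s y (fe s y)).
  { intros s' y Hy. apply exists_interp_of_forall, IH. simpl; lia. }
  assert (Hb : forall x, In x (fst (nf f)) -> clause_bounded (gembeds false f) (gembeds true f) x)
    by apply (nf_bounded_self f).
  simpl. fold fa. change (fun t x => cneg (uinterp Ax P p m (negb t) (cneg x))) with fe.
  split; [|split; [|split]].
  - rewrite cocc_bigand. destruct (existsb _ _) eqn:E; auto.
    apply existsb_exists in E as [z [Hz E]]. apply in_map_iff in Hz as [x [<- Hx]].
    rewrite (clause_interp_free Ax P p fa fe m IH DE f x (Hb x Hx) Hfm) in E; discriminate.
  - intros t q Ho. rewrite cocc_bigand in Ho.
    apply existsb_exists in Ho as [z [Hz E]]. apply in_map_iff in Hz as [x [<- Hx]].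
    apply (clause_interp_vars Ax P p fa fe m IH DE f x (Hb x Hx) Hfm s t q E).
  - apply (cprov_complete Ax P HP rules_derivable). intros va vc Hr. simpl.
    rewrite ceval_bigand. destruct (forallb _ _) eqn:E; simpl; auto.
    rewrite <- (proj1 (nf_eval va vc f)).
    apply forallb_forall. intros x Hx. rewrite forallb_forall in E.
    apply (clause_interp_sound Ax P p HP axioms_valid fa fe x s va vc Hr), E, in_map; auto.
  - intros psi Hf Hp. apply (cprov_complete Ax P HP rules_derivable). intros va vc Hr. simpl.
    destruct (ceval va vc psi) eqn:Ep; simpl; auto.
    rewrite ceval_bigand. apply NNPP; intros Hn. apply not_true_is_false in Hn.
    apply forallb_false_ex in Hn as [z [Hz Ez]]. apply in_map_iff in Hz as [x [<- Hx]].
    destruct (clause_interp_cex Ax P p HP rules_derivable fa fe m IH DE f x (Hb x Hx) Hfm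
                s va vc Hr Ez) as [va' [vc' [Hr' [Hs Hce]]]].
    (* [psi] is [p^s]-free, so it survives the move to the countermodel, where it
       entails [f] and hence the clause. *)
    pose proof (proj1 (ceval_simulates p s va vc va' vc' Hs psi) Hf Ep) as Ep'.
    pose proof (cprov_sound Ax P HP axioms_valid _ Hp va' vc' Hr') as Hs2. simpl in Hs2.
    rewrite Ep' in Hs2. simpl in Hs2.
    rewrite <- (proj1 (nf_eval va' vc' f)), forallb_forall in Hs2.
    rewrite (Hs2 x Hx) in Hce; discriminate.
Qed.

Lemma uinterp_forall n : forall s f, cdepth f < n -> forall_interp Ax p s f (uinterp Ax P p n s f).
Proof.
  induction n as [|m IH]; intros s f Hd; [lia|].
  apply uinterp_step; auto; lia.
Qed.

End UniformInterpolation.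

Theorem ULIP_of_rule_semantics Ax P :
  admissible P ->
  (forall f, Ax f -> forall va vc, rule_closed Ax P vc -> ceval va vc f = true) ->
  (forall S c d, rule_inst Ax P S c d -> cprov Ax (CImp (bigand (map cond_of S)) (CCond c d))) ->
  ULIP_c (cprov Ax).
Proof.
  intros HP Hval Hder phi p s. split.
  - exists (uinterp Ax P p (S (cdepth phi)) s phi).
    apply (uinterp_forall Ax P p HP Hval Hder); lia.
  - exists (cneg (uinterp Ax P p (S (cdepth phi)) (negb s) (cneg phi))).
    apply exists_interp_of_forall, (uinterp_forall Ax P p HP Hval Hder); simpl; lia.
Qed.

(** * The conditional logics *)

Section ConditionalRules.
Variable Ax : cform -> Prop.
Notation prov := (cprov Ax).

Lemma cprov_imp_trans a b c : prov (CImp a b) -> prov (CImp b c) -> prov (CImp a c).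
Proof. intros H1 H2; apply (cprov_entails2 _ _ _ _ H1 H2); ctaut. Qed.

Lemma cprov_imp_refl a : prov (CImp a a).
Proof. apply cprov_valid; ctaut. Qed.

Lemma cprov_iff_refl a : prov (CIff a a).
Proof. apply cprov_valid; ctaut. Qed.

Lemma cprov_cond_congr c X Y : prov (CIff X Y) -> prov (CImp (CCond c X) (CCond c Y)).
Proof. intros H; apply cp_re; auto; apply cprov_iff_refl. Qed.

Lemma conds_rewrite_ante S c : (forall y, In y S -> prov (CIff (fst y) c)) ->
  prov (CImp (bigand (map cond_of S)) (bigand (map (CCond c) (map snd S)))).
Proof.
  induction S as [|y S IH]; intros H; simpl.
  - apply cprov_valid; ctaut.
  - assert (H1 : prov (CImp (CCond (fst y) (snd y)) (CCond c (snd y)))).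
    { apply cp_re; [apply H; left; auto|apply cprov_iff_refl]. }
    assert (H2 := IH (fun z Hz => H z (or_intror Hz))).
    unfold cond_of at 1. apply (cprov_entails2 _ _ _ _ H1 H2); ctaut.
Qed.

Lemma cond_conj_single c b : prov (CImp (bigand [CCond c b]) (CCond c (bigand [b]))).
Proof.
  assert (H : prov (CImp (CCond c b) (CCond c (CAnd b CTop)))).
  { apply cprov_cond_congr, cprov_valid; ctaut. }
  apply (cprov_entails1 _ _ _ H); ctaut.
Qed.

Lemma cond_conj_nil (hasCN : forall a, Ax (CCond a CTop)) c :
  prov (CImp (bigand []) (CCond c (bigand []))).
Proof. apply (cprov_entails1 _ _ _ (cp_ax _ _ (hasCN c))); ctaut. Qed.

Lemma cond_conj_cons
  (hasCC : forall a b d, Ax (CImp (CAnd (CCond a b) (CCond a d)) (CCond a (CAnd b d))))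
  c l : l <> [] -> prov (CImp (bigand (map (CCond c) l)) (CCond c (bigand l))).
Proof.
  induction l as [|b l IH]; intros Hne; [congruence|].
  destruct l as [|b' l'].
  - apply cond_conj_single.
  - assert (H1 := IH ltac:(discriminate)).
    assert (H2 := cp_ax _ _ (hasCC c b (bigand (b' :: l')))).
    apply (cprov_entails2 _ _ _ _ H1 H2). intros va vc. simpl. revert va vc. ctaut.
Qed.

Lemma cprov_cond_mono
  (hasCM : forall a b d, Ax (CImp (CCond a (CAnd b d)) (CAnd (CCond a b) (CCond a d))))
  c X Y : prov (CImp X Y) -> prov (CImp (CCond c X) (CCond c Y)).
Proof.
  intros H.
  assert (H1 : prov (CImp (CCond c X) (CCond c (CAnd X Y)))).
  { apply cprov_cond_congr. apply (cprov_entails1 _ _ _ H); ctaut. }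
  apply (cprov_entails2 _ _ _ _ H1 (cp_ax _ _ (hasCM c X Y))); ctaut.
Qed.

Lemma cond_id_conj
  (hasCC : forall a b d, Ax (CImp (CAnd (CCond a b) (CCond a d)) (CCond a (CAnd b d))))
  (hasID : forall a, Ax (CCond a a)) c X : prov (CImp (CCond c X) (CCond c (CAnd c X))).
Proof. apply (cprov_entails2 _ _ _ _ (cp_ax _ _ (hasID c)) (cp_ax _ _ (hasCC c c X))); ctaut. Qed.

Variable P : rule_params.
Hypothesis HP : admissible P.
Hypothesis cond_conj : forall c l, arity_ok P (length l) = true ->
  prov (CImp (bigand (map (CCond c) l)) (CCond c (bigand l))).
Hypothesis cond_mono : monotone P = true ->
  forall c X Y, prov (CImp X Y) -> prov (CImp (CCond c X) (CCond c Y)).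
Hypothesis cond_id : with_id P = true -> forall c X, prov (CImp (CCond c X) (CCond c (CAnd c X))).

Lemma rules_derivable_of S c d :
  rule_inst Ax P S c d -> prov (CImp (bigand (map cond_of S)) (CCond c d)).
Proof.
  intros [Hl Hf Hg Hm].
  apply (cprov_imp_trans _ _ _ (conds_rewrite_ante S c Hf)).
  apply (cprov_imp_trans _ _ _ (cond_conj c (map snd S) ltac:(rewrite length_map; auto))).
  unfold id_guard in Hg. destruct (monotone P) eqn:Em.
  - destruct (with_id P) eqn:Ei.
    + apply (cprov_imp_trans _ _ _ (cond_id eq_refl _ _)); auto.
    + auto.
  - destruct Hm as [Hm|Hm]; [discriminate|].
    rewrite (adm_nonmono_no_id _ HP Em) in Hg.
    apply cprov_cond_congr, (cprov_entails2 _ _ _ _ Hg Hm); ctaut.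
Qed.

End ConditionalRules.

Section AxiomValidity.
Variable Ax : cform -> Prop.
Variable P : rule_params.
Variable va : nat -> bool.
Variable vc : cform -> cform -> bool.
Hypothesis vc_closed : rule_closed Ax P vc.

Lemma CM_valid a b c : monotone P = true -> arity_ok P 1 = true ->
  ceval va vc (CImp (CCond a (CAnd b c)) (CAnd (CCond a b) (CCond a c))) = true.
Proof.
  intros Hm H1. simpl. destruct (vc a (CAnd b c)) eqn:E; simpl; auto.
  assert (K : forall e, cprov Ax (CImp (CAnd (CAnd b c) CTop) e) -> vc a e = true).
  { intros e He. apply (vc_closed [(a, CAnd b c)]); [|intros y [<-|[]]; auto].
    split; simpl; auto.
    - intros y [<-|[]]; apply cprov_valid; ctaut.
    - apply (cprov_entails1 _ _ _ He); ctaut. }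
  rewrite !K; auto; apply cprov_valid; ctaut.
Qed.

Lemma CC_valid a b c : monotone P = true -> arity_ok P 2 = true ->
  ceval va vc (CImp (CAnd (CCond a b) (CCond a c)) (CCond a (CAnd b c))) = true.
Proof.
  intros Hm H2. simpl. destruct (vc a b) eqn:E1, (vc a c) eqn:E2; simpl; auto.
  apply (vc_closed [(a, b); (a, c)]); [|intros y [<-|[<-|[]]]; auto].
  split; simpl; auto.
  - intros y [<-|[<-|[]]]; apply cprov_valid; ctaut.
  - apply cprov_valid; ctaut.
Qed.

Lemma CN_valid a : arity_ok P 0 = true -> ceval va vc (CCond a CTop) = true.
Proof.
  intros H0. simpl. apply (vc_closed []); [|intros y []].
  split; simpl; auto.
  - intros y [].
  - apply cprov_valid; ctaut.
  - right; apply cprov_valid; ctaut.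
Qed.

Lemma ID_valid a : with_id P = true -> arity_ok P 0 = true -> ceval va vc (CCond a a) = true.
Proof.
  intros Hi H0. simpl. apply (vc_closed []); [|intros y []].
  split; simpl; auto.
  - intros y [].
  - unfold id_guard; rewrite Hi. apply cprov_valid; ctaut.
  - right; apply cprov_valid; ctaut.
Qed.

End AxiomValidity.

Definition arity_one (n : nat) : bool := Nat.eqb n 1.
Definition arity_pos (n : nat) : bool := Nat.leb 1 n.
Definition arity_le1 (n : nat) : bool := Nat.leb n 1.
Definition arity_any (n : nat) : bool := true.

Definition cond_params (L : cond_logic) : rule_params :=
  match L with
  | LCE => RuleParams false arity_one false
  | LCM => RuleParams true arity_one false
  | LCMC => RuleParams true arity_pos false
  | LCEN => RuleParams false arity_le1 false
  | LCMN => RuleParams true arity_le1 false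
  | LCK => RuleParams true arity_any false
  | LCKID => RuleParams true arity_any true
  end.

Definition arity_closed (g : nat -> bool) : Prop :=
  g 1 = true /\
  (forall lens, g (length lens) = true -> Forall (fun k => g k = true) lens ->
     g (list_sum lens) = true) /\
  (forall n k, g n = true -> 1 <= k -> k <= n -> g k = true).

Lemma admissible_of mono g id : arity_closed g ->
  (mono = false -> forall n, g n = true -> n <= 1) -> (mono = false -> id = false) ->
  admissible (RuleParams mono g id).
Proof. intros [H1 [H2 H3]] H4 H5; split; auto. Qed.

Lemma arity_one_closed : arity_closed arity_one.
Proof.
  unfold arity_closed, arity_one; repeat split.
  - intros lens H F. apply Nat.eqb_eq in H. destruct lens as [|k [|]]; simpl in *; try lia.
    inversion F; subst. apply Nat.eqb_eq in H2. apply Nat.eqb_eq; lia.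
  - intros n k H1 H2 H3. apply Nat.eqb_eq in H1. apply Nat.eqb_eq; lia.
Qed.

Lemma arity_pos_closed : arity_closed arity_pos.
Proof.
  unfold arity_closed, arity_pos; repeat split.
  - intros [|k lens] H F; [discriminate|]. inversion F; subst.
    apply Nat.leb_le in H2. apply Nat.leb_le; simpl; lia.
  - intros n k H1 H2 H3. apply Nat.leb_le; lia.
Qed.

Lemma arity_le1_closed : arity_closed arity_le1.
Proof.
  unfold arity_closed, arity_le1; repeat split.
  - intros [|k [|k' lens]] H F; [reflexivity| |discriminate]. inversion F; subst.
    apply Nat.leb_le in H2. apply Nat.leb_le; simpl; lia.
  - intros n k H1 H2 H3. apply Nat.leb_le in H1. apply Nat.leb_le; lia.
Qed.

Lemma arity_any_closed : arity_closed arity_any.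
Proof. unfold arity_closed, arity_any; repeat split; auto. Qed.

Lemma cond_params_admissible L : admissible (cond_params L).
Proof.
  destruct L; apply admissible_of; auto using arity_one_closed, arity_pos_closed,
    arity_le1_closed, arity_any_closed; try discriminate; intros _ n Hn.
  - apply Nat.eqb_eq in Hn; lia.
  - apply Nat.leb_le in Hn; lia.
Qed.

Lemma cond_axioms_valid L f : cond_axioms L f ->
  forall va vc, rule_closed (cond_axioms L) (cond_params L) vc -> ceval va vc f = true.
Proof.
  intros Hf va vc Hr.
  destruct L; simpl in Hf;
    repeat match goal with
           | H : _ \/ _ |- _ => destruct H
           | H : axCM _ |- _ => destruct H as [a [b [c ->]]]
           | H : axCC _ |- _ => destruct H as [a [b [c ->]]]
           | H : axCN _ |- _ => destruct H as [a ->]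
           | H : axID _ |- _ => destruct H as [a ->]
           end; try contradiction;
    first [apply (CM_valid _ _ _ _ Hr) | apply (CC_valid _ _ _ _ Hr)
          | apply (CN_valid _ _ _ _ Hr) | apply (ID_valid _ _ _ _ Hr)];
    auto; reflexivity.
Qed.

Ltac has_axiom := intros; simpl; unfold axCM, axCC, axCN, axID; solve [eauto 8].

Lemma cond_rules_derivable L S c d : rule_inst (cond_axioms L) (cond_params L) S c d ->
  cprov (cond_axioms L) (CImp (bigand (map cond_of S)) (CCond c d)).
Proof.
  apply rules_derivable_of; [apply cond_params_admissible| | |].
  - intros c' l Hl.
    destruct l as [|b [|b' l']]; simpl in Hl.
    + apply cond_conj_nil; destruct L; try discriminate; has_axiom.
    + apply cond_conj_single.
    + apply cond_conj_cons; [|discriminate]. destruct L; try discriminate; has_axiom.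
  - intros Hm; apply cprov_cond_mono. destruct L; try discriminate; has_axiom.
  - intros Hi; apply cond_id_conj; destruct L; try discriminate; has_axiom.
Qed.

Theorem ULIP_cond L : ULIP_c (ctheorems L).
Proof.
  apply (ULIP_of_rule_semantics _ (cond_params L)).
  - apply cond_params_admissible.
  - apply cond_axioms_valid.
  - apply cond_rules_derivable.
Qed.

(** * From ULIP to UIP and LIP *)

Section InterpolationConsequences.
Variable F : Type.
Variable imp : F -> F -> F.
Variable occ : bool -> nat -> F -> bool.
Variable L : F -> Prop.
Hypothesis imp_trans : forall a b c, L (imp a b) -> L (imp b c) -> L (imp a c).
Hypothesis imp_refl : forall a, L (imp a a).
Hypothesis finite_vars : forall phi, exists l, forall t q, occ t q phi = true -> In q l.
Hypothesis HU : ULIP_gen imp occ L.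

(* Eliminating [p] means eliminating [p^-] and then [p^+]. *)
Lemma UIP_of_ULIP : UIP_gen imp occ L.
Proof.
  intros phi p. unfold vars. split.
  - destruct (HU phi p false) as [[A1 [F1 [V1 [I1 U1]]]] _].
    destruct (HU A1 p true) as [[A2 [F2 [V2 [I2 U2]]]] _].
    exists A2. split; [|split; [|split]].
    + rewrite F2. simpl. destruct (occ false p A2) eqn:E; auto. apply V2 in E. congruence.
    + intros q Hq. apply orb_true_iff in Hq as [Hq|Hq]; apply V2, V1 in Hq; rewrite Hq;
        auto with bool.
    + eauto.
    + intros psi Hf Hp. apply orb_false_iff in Hf as [Hf1 Hf2]. apply U2; auto.
  - destruct (HU phi p false) as [_ [A1 [F1 [V1 [I1 U1]]]]].
    destruct (HU A1 p true) as [_ [A2 [F2 [V2 [I2 U2]]]]].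
    exists A2. split; [|split; [|split]].
    + rewrite F2. simpl. destruct (occ false p A2) eqn:E; auto. apply V2 in E. congruence.
    + intros q Hq. apply orb_true_iff in Hq as [Hq|Hq]; apply V2, V1 in Hq; rewrite Hq;
        auto with bool.
    + eauto.
    + intros psi Hf Hp. apply orb_false_iff in Hf as [Hf1 Hf2]. apply U2; auto.
Qed.

(* Existentially eliminating, one by one, the polarized atoms of [phi] absent from [psi]. *)
Lemma interpolant_avoiding phi psi : L (imp phi psi) -> forall ps : list (bool * nat),
  exists th, L (imp phi th) /\ L (imp th psi) /\
    (forall t q, occ t q th = true -> occ t q phi = true) /\
    (forall t q, In (t, q) ps -> occ t q psi = false -> occ t q th = false).
Proof.
  intros H. induction ps as [|[t0 q0] ps IH].
  - exists phi; repeat split; auto. intros t q [].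
  - destruct IH as [th [H1 [H2 [H3 H4]]]].
    destruct (occ t0 q0 psi) eqn:Eo.
    + exists th; repeat split; auto.
      intros t q [E|Hin] Ho; [inversion E; subst; congruence|auto].
    + destruct (HU th q0 t0) as [_ [E [F1 [V1 [I1 U1]]]]].
      exists E; repeat split; eauto.
      intros t q [Eq|Hin] Ho; [inversion Eq; subst; auto|].
      destruct (occ t q E) eqn:Ee; auto. apply V1 in Ee. rewrite (H4 t q Hin Ho) in Ee; auto.
Qed.

Lemma LIP_of_ULIP : LIP_gen imp occ L.
Proof.
  intros phi psi H. destruct (finite_vars phi) as [l Hl].
  destruct (interpolant_avoiding phi psi H (flat_map (fun q => [(true, q); (false, q)]) l))
    as [th [H1 [H2 [H3 H4]]]].
  exists th; split; [|split; auto].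
  intros t q Ho. split; auto.
  destruct (occ t q psi) eqn:E; auto.
  rewrite (H4 t q) in Ho; auto.
  apply in_flat_map. exists q; split; [apply (Hl t q); auto|]. destruct t; simpl; auto.
Qed.

End InterpolationConsequences.

Fixpoint catoms (f : cform) : list nat :=
  match f with
  | CAtom n => [n]
  | CBot => []
  | CAnd a b | COr a b | CImp a b | CCond a b => catoms a ++ catoms b
  end.

Lemma catoms_occ f : forall t q, cocc t q f = true -> In q (catoms f).
Proof.
  induction f; intros t q H; simpl in *; try discriminate;
    try (apply orb_true_iff in H as [H|H]; apply in_or_app; eauto).
  apply andb_true_iff in H as [_ H]; apply Nat.eqb_eq in H; auto.
Qed.

Fixpoint matoms (f : mform) : list nat :=
  match f with
  | MAtom n => [n]
  | MBot => []
  | MAnd a b | MOr a b | MImp a b => matoms a ++ matoms b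
  | MBox a => matoms a
  end.

Lemma matoms_occ f : forall t q, mocc t q f = true -> In q (matoms f).
Proof.
  induction f; intros t q H; simpl in *; try discriminate;
    try (apply orb_true_iff in H as [H|H]; apply in_or_app; eauto).
  - apply andb_true_iff in H as [_ H]; apply Nat.eqb_eq in H; auto.
  - eauto.
Qed.

(** * The modal logics *)

(* [□ a] is read as the conditional [⊥ ▷ a]; back-translation forgets antecedents. *)
Fixpoint cond_of_modal (f : mform) : cform :=
  match f with
  | MAtom n => CAtom n
  | MBot => CBot
  | MAnd a b => CAnd (cond_of_modal a) (cond_of_modal b)
  | MOr a b => COr (cond_of_modal a) (cond_of_modal b)
  | MImp a b => CImp (cond_of_modal a) (cond_of_modal b)
  | MBox a => CCond CBot (cond_of_modal a)
  end.

Fixpoint modal_of_cond (f : cform) : mform :=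
  match f with
  | CAtom n => MAtom n
  | CBot => MBot
  | CAnd a b => MAnd (modal_of_cond a) (modal_of_cond b)
  | COr a b => MOr (modal_of_cond a) (modal_of_cond b)
  | CImp a b => MImp (modal_of_cond a) (modal_of_cond b)
  | CCond a b => MBox (modal_of_cond b)
  end.

Lemma modal_of_cond_of_modal f : modal_of_cond (cond_of_modal f) = f.
Proof. induction f; simpl; congruence. Qed.

Lemma cocc_cond_of_modal t q f : cocc t q (cond_of_modal f) = mocc t q f.
Proof. revert t; induction f; intros t; simpl; try rewrite IHf1, IHf2; auto. Qed.

Lemma mocc_modal_of_cond t q f : mocc t q (modal_of_cond f) = true -> cocc t q f = true.
Proof. revert t; induction f; intros t; simpl; auto; try (rewrite !orb_true_iff; intuition). Qed.

Lemma cond_of_modal_subst sg t : cond_of_modal (msubst sg t) = csubst (fun n => cond_of_modal (sg n)) t.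
Proof. induction t; simpl; congruence. Qed.

Lemma modal_of_cond_subst sg t : modal_of_cond (csubst sg t) = msubst (fun n => modal_of_cond (sg n)) t.
Proof. induction t; simpl; congruence. Qed.

Definition cond_counterpart (L : modal_logic) : cond_logic :=
  match L with LE => LCE | LM => LCM | LMC => LCMC | LEN => LCEN | LMN => LCMN | LK => LCK end.

Definition pform3 (a b c : mform) (n : nat) : mform := match n with 0 => a | 1 => b | _ => c end.

Lemma mprov_imp_trans Ax a b c :
  mprov Ax (MImp a b) -> mprov Ax (MImp b c) -> mprov Ax (MImp a c).
Proof.
  intros H1 H2.
  assert (T : mprov Ax (msubst (pform3 a b c) (PImp (PImp (PAtom 0) (PAtom 1))
      (PImp (PImp (PAtom 1) (PAtom 2)) (PImp (PAtom 0) (PAtom 2)))))).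
  { apply mp_taut. intros v; simpl. destruct (v 0), (v 1), (v 2); reflexivity. }
  exact (mp_mp _ _ _ (mp_mp _ _ _ T H1) H2).
Qed.

Lemma mprov_imp_refl Ax a : mprov Ax (MImp a a).
Proof.
  apply (mp_taut _ (PImp (PAtom 0) (PAtom 0)) (pform3 a a a)).
  intros v; simpl. destruct (v 0); reflexivity.
Qed.

Lemma mprov_iff_imp Ax a b : mprov Ax (MIff a b) -> mprov Ax (MImp a b).
Proof.
  intros H.
  assert (T : mprov Ax (msubst (pform3 a b b)
      (PImp (PAnd (PImp (PAtom 0) (PAtom 1)) (PImp (PAtom 1) (PAtom 0)))
            (PImp (PAtom 0) (PAtom 1))))).
  { apply mp_taut. intros v; simpl. destruct (v 0), (v 1); reflexivity. }
  exact (mp_mp _ _ _ T H).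
Qed.

Lemma ctheorems_cond_of_modal L f :
  mtheorems L f -> ctheorems (cond_counterpart L) (cond_of_modal f).
Proof.
  unfold mtheorems, ctheorems. induction 1.
  - rewrite cond_of_modal_subst. apply cp_taut; auto.
  - apply cp_ax. destruct L; simpl in *;
      repeat match goal with
             | H : _ \/ _ |- _ => destruct H
             | H : axM _ |- _ => destruct H as [a [b ->]]
             | H : axC _ |- _ => destruct H as [a [b ->]]
             | H : axN _ |- _ => rewrite H
             end; try contradiction; simpl; unfold axCM, axCC, axCN; eauto 8.
  - exact (cp_mp _ _ _ IHmprov1 IHmprov2).
  - simpl in *. fold (CIff (cond_of_modal f) (cond_of_modal g)) in IHmprov.
    assert (H1 := cp_re _ _ _ _ _ (cprov_iff_refl _ CBot) IHmprov).
    assert (H2 : cprov (cond_axioms (cond_counterpart L)) (CIff (cond_of_modal g) (cond_of_modal f))).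
    { apply (cprov_entails1 _ _ _ IHmprov); ctaut. }
    assert (H3 := cp_re _ _ _ _ _ (cprov_iff_refl _ CBot) H2).
    apply (cprov_entails2 _ _ _ _ H1 H3); ctaut.
Qed.

Lemma mtheorems_modal_of_cond L X :
  ctheorems (cond_counterpart L) X -> mtheorems L (modal_of_cond X).
Proof.
  unfold mtheorems, ctheorems. induction 1.
  - rewrite modal_of_cond_subst. apply mp_taut; auto.
  - apply mp_ax. destruct L; simpl in *;
      repeat match goal with
             | H : _ \/ _ |- _ => destruct H
             | H : axCM _ |- _ => destruct H as [a [b [c ->]]]
             | H : axCC _ |- _ => destruct H as [a [b [c ->]]]
             | H : axCN _ |- _ => destruct H as [a ->]
             end; try contradiction; simpl; unfold axM, axC, axN; eauto 8.
  - exact (mp_mp _ _ _ IHcprov1 IHcprov2).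
  - simpl in *. apply mprov_iff_imp. apply mp_re. exact IHcprov2.
Qed.

Lemma mocc_modal_of_cond_free s p phi A :
  cocc s p A = false -> (forall t q, cocc t q A = true -> cocc t q (cond_of_modal phi) = true) ->
  mocc s p (modal_of_cond A) = false /\
  (forall t q, mocc t q (modal_of_cond A) = true -> mocc t q phi = true).
Proof.
  intros Hf Hv. split.
  - destruct (mocc s p (modal_of_cond A)) eqn:Eo; auto.
    apply mocc_modal_of_cond in Eo; congruence.
  - intros t q Ho. apply mocc_modal_of_cond, Hv in Ho. rewrite cocc_cond_of_modal in Ho; auto.
Qed.

Lemma ULIP_modal_of_cond L : ULIP_c (ctheorems (cond_counterpart L)) -> ULIP_m (mtheorems L).
Proof.
  intros HU phi p s.
  destruct (HU (cond_of_modal phi) p s) as [[A [F1 [V1 [I1 U1]]]] [E [F2 [V2 [I2 U2]]]]].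
  split.
  - exists (modal_of_cond A).
    destruct (mocc_modal_of_cond_free s p phi A F1 V1) as [F V].
    split; [|split; [|split]]; auto.
    + rewrite <- (modal_of_cond_of_modal phi). apply (mtheorems_modal_of_cond L (CImp _ _)); auto.
    + intros psi Hf Hp. rewrite <- (modal_of_cond_of_modal psi).
      apply (mtheorems_modal_of_cond L (CImp _ _)), U1; [rewrite cocc_cond_of_modal; auto|].
      apply (ctheorems_cond_of_modal _ _ Hp).
  - exists (modal_of_cond E).
    destruct (mocc_modal_of_cond_free s p phi E F2 V2) as [F V].
    split; [|split; [|split]]; auto.
    + rewrite <- (modal_of_cond_of_modal phi). apply (mtheorems_modal_of_cond L (CImp _ _)); auto.
    + intros psi Hf Hp. rewrite <- (modal_of_cond_of_modal psi).
      apply (mtheorems_modal_of_cond L (CImp _ _)), U2; [rewrite cocc_cond_of_modal; auto|].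
      apply (ctheorems_cond_of_modal _ _ Hp).
Qed.

Theorem mainTheorem8 :
  (forall L : modal_logic,
      ULIP_m (mtheorems L) /\ UIP_m (mtheorems L) /\ LIP_m (mtheorems L)) /\
  (forall L : cond_logic,
      ULIP_c (ctheorems L) /\ UIP_c (ctheorems L) /\ LIP_c (ctheorems L)).
Proof.
  split; intros L.
  - pose proof (ULIP_modal_of_cond L (ULIP_cond _)) as HU.
    split; [exact HU|split].
    + apply UIP_of_ULIP; auto. apply mprov_imp_trans.
    + apply LIP_of_ULIP; auto.
      * apply mprov_imp_trans.
      * apply mprov_imp_refl.
      * intros phi; exists (matoms phi); apply matoms_occ.
  - pose proof (ULIP_cond L) as HU.
    split; [exact HU|split].
    + apply UIP_of_ULIP; auto. apply cprov_imp_trans.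
    + apply LIP_of_ULIP; auto.
      * apply cprov_imp_trans.
      * apply cprov_imp_refl.
      * intros phi; exists (catoms phi); apply catoms_occ.
Qed.
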